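(* Let $\rho,\delta>0$, $f\in A_\rho(\mathbb{C}^\ell,\mathbb{C}^d)$, and let $E=A_\delta(\mathbb{C}^m,\mathbb{C}^\ell)$, $F=A_\delta(\mathbb{C}^m,\mathbb{C}^d)$. Let $E(\rho)=\{g\in E:\|g\|_\delta\le\rho\}$. Then the operator $\mathcal{C}_f:E(\rho)\to F$, $\mathcal{C}_f(g)=f\circ g$, is well defined and analytic in the sense that $\mathcal{C}_f\in A_\rho(E,F)$; moreover $\|\mathcal{C}_f\|_{A_\rho(E,F)}\le\|f\|_\rho$.
   Context: Sup norm $\|\eta\|_\infty=\max_i|\eta_i|$ on $\mathbb{C}^s$; $\mathbb{C}^r(\rho)=\{z:\|z\|_\infty\le\rho\}$; multi-index notation $z^\alpha$, $|\alpha|$. For $\rho>0$, $A_\rho(\mathbb{C}^r,\mathbb{C}^s)$ is the Banach space of $f:\mathbb{C}^r(\rho)\to\mathbb{C}^s$, $f(z)=\sum_{k\ge0}\sum_{|\alpha|=k}z^\alpha\eta_\alpha$ with norm $\|f\|_\rho=\sum_{k\ge0}(\sum_{|\alpha|=k}\|\eta_\alpha\|_\infty)\rho^k<\infty$. For Banach spaces $E,F$, $\mathcal{S}_k(E,F)$ denotes bounded symmetric $k$-linear maps $E^k\to F$; here it is normed by $\|b\|=\sup\{\|b(g_1,\ldots,g_k)\|_F:\|g_1\|_E=\cdots=\|g_k\|_E=1\}$. $A_\rho(E,F)$ denotes the space of maps $\Psi$ on the closed ball $E(\rho)$ of the form $\Psi(x)=\sum_{k\ge0}b_k(x,\ldots,x)$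 with $b_k\in\mathcal{S}_k(E,F)$ and $\|\Psi\|_{A_\rho(E,F)}=\sum_k\|b_k\|\rho^k<\infty$. *)

From Stdlib Require Import Reals List Arith ClassicalEpsilon.
Import ListNotations.
Open Scope R_scope.

Definition C : Type := (R * R)%type.
Definition C0 : C := (0, 0).
Definition C1 : C := (1, 0).
Definition Cadd (x y : C) : C := (fst x + fst y, snd x + snd y).
Definition Copp (x : C) : C := (- fst x, - snd x).
Definition Csub (x y : C) : C := Cadd x (Copp y).
Definition Cmul (x y : C) : C :=
  (fst x * fst y - snd x * snd y, fst x * snd y + snd x * fst y).
Fixpoint Cpow (x : C) (n : nat) : C :=
  match n with O => C1 | S n => Cmul x (Cpow x n) end.
Definition Cmod (x : C) : R := sqrt (fst x * fst x + snd x * snd x).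
Fixpoint Csum (u : nat -> C) (n : nat) : C :=
  match n with O => u O | S n => Cadd (Csum u n) (u (S n)) end.
Definition Clsum (l : list C) : C := fold_right Cadd C0 l.
Definition Ccv (u : nat -> C) (lim : C) : Prop :=
  Un_cv (fun n => fst (u n)) (fst lim) /\ Un_cv (fun n => snd (u n)) (snd lim).

(* ---------- vectors of C^s : only the components i < s matter ---------- *)
Definition vec : Type := nat -> C.
Fixpoint vnorm (s : nat) (v : vec) : R :=
  match s with O => 0 | S s => Rmax (vnorm s v) (Cmod (v s)) end.
Definition polydisc (r : nat) (rho : R) (z : vec) : Prop :=
  forall i, (i < r)%nat -> Cmod (z i) <= rho.

(* a multi-index alpha in N^r is a list of length r *)
Fixpoint mi (r k : nat) : list (list nat) :=
  match r with
  | O => match k with O => [ [] ] | S _ => [] end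
  | S r' => flat_map (fun j => map (cons j) (mi r' (k - j))) (seq 0 (S k))
  end.
Fixpoint mono_from (i : nat) (z : vec) (alpha : list nat) : C :=
  match alpha with
  | [] => C1
  | a :: t => Cmul (Cpow (z i) a) (mono_from (S i) z t)
  end.
Definition mono (z : vec) (alpha : list nat) : C := mono_from 0 z alpha.

Definition coef : Type := list nat -> vec.
Definition hom_part (r : nat) (eta : coef) (k : nat) (z : vec) : vec :=
  fun i => Clsum (map (fun alpha => Cmul (mono z alpha) (eta alpha i)) (mi r k)).
Definition norm_term (r s : nat) (rho : R) (eta : coef) (k : nat) : R :=
  fold_right Rplus 0 (map (fun alpha => vnorm s (eta alpha)) (mi r k)) * rho ^ k.

(* maps C^r(rho) -> C^s (total functions; only values on the polydisc and
   components i < s matter) *)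
Definition fn : Type := vec -> vec.
Definition represents (r s : nat) (rho : R) (f : fn) (eta : coef) : Prop :=
  forall z, polydisc r rho z -> forall i, (i < s)%nat ->
    Ccv (fun n => Csum (fun k => hom_part r eta k z i) n) (f z i).
Definition Anorm_is (r s : nat) (rho : R) (f : fn) (N : R) : Prop :=
  exists eta : coef, represents r s rho f eta /\
    infinite_sum (norm_term r s rho eta) N.
Definition inA (r s : nat) (rho : R) (f : fn) : Prop :=
  exists N, Anorm_is r s rho f N.
(* the norm ||f||_rho (well defined by uniqueness of power-series coefficients) *)
Definition Anorm (r s : nat) (rho : R) (f : fn) : R :=
  epsilon (inhabits 0) (Anorm_is r s rho f).
Definition Aeq (r s : nat) (rho : R) (f g : fn) : Prop :=
  forall z, polydisc r rho z -> forall i, (i < s)%nat -> f z i = g z i.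

Definition fadd (f g : fn) : fn := fun z i => Cadd (f z i) (g z i).
Definition fsub (f g : fn) : fn := fun z i => Csub (f z i) (g z i).
Definition fscal (a : C) (f : fn) : fn := fun z i => Cmul a (f z i).
Definition fzero : fn := fun _ _ => C0.
Fixpoint fsum (u : nat -> fn) (n : nat) : fn :=
  match n with O => u O | S n => fadd (fsum u n) (u (S n)) end.

(* ---------- bounded symmetric k-linear maps E^k -> F ----------
   E = A_delta(C^m,C^l), F = A_delta(C^m,C^d).  A k-linear map is
   b : (nat -> fn) -> fn, of which only the arguments 0..k-1 are used. *)
Definition upd (g : nat -> fn) (j : nat) (x : fn) : nat -> fn :=
  fun i => if Nat.eqb i j then x else g i.
Definition is_perm (k : nat) (sigma : nat -> nat) : Prop :=
  (forall i, (i < k)%nat -> (sigma i < k)%nat) /\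
  (forall i j, (i < k)%nat -> (j < k)%nat -> sigma i = sigma j -> i = j).

Definition sym_multilinear (m l d : nat) (delta : R) (k : nat)
    (b : (nat -> fn) -> fn) : Prop :=
  (forall g, (forall i, (i < k)%nat -> inA m l delta (g i)) ->
     inA m d delta (b g)) /\
  (forall g g', (forall i, (i < k)%nat -> inA m l delta (g i)) ->
     (forall i, (i < k)%nat -> inA m l delta (g' i)) ->
     (forall i, (i < k)%nat -> Aeq m l delta (g i) (g' i)) ->
     Aeq m d delta (b g) (b g')) /\
  (forall g j x y (a : C), (j < k)%nat ->
     (forall i, (i < k)%nat -> inA m l delta (g i)) ->
     inA m l delta x -> inA m l delta y ->
     Aeq m d delta (b (upd g j (fadd (fscal a x) y)))
                   (fadd (fscal a (b (upd g j x))) (b (upd g j y)))) /\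
  (forall g sigma, is_perm k sigma ->
     (forall i, (i < k)%nat -> inA m l delta (g i)) ->
     Aeq m d delta (b (fun i => g (sigma i))) (b g)).

(* ||b|| = sup { ||b(g_1,...,g_k)||_F : ||g_1||_E = ... = ||g_k||_E = 1 }
   (with 0 adjoined, so that the sup is 0 when the unit sphere is empty);
   the existence of this lub is the boundedness of b. *)
Definition opnorm_is (m l d : nat) (delta : R) (k : nat)
    (b : (nat -> fn) -> fn) (N : R) : Prop :=
  is_lub (fun x => x = 0 \/
            exists g : nat -> fn,
              (forall i, (i < k)%nat ->
                 inA m l delta (g i) /\ Anorm m l delta (g i) = 1) /\
              x = Anorm m d delta (b g)) N.

(** The proof works with _expansions_: a map is expanded by a sequence of finite
    lists of monomial terms [(α, v)] whose weights [‖v‖ ρ^|α|] have a convergent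
    sum [W] and whose values add up to the map on the polydisc.  The main facts are:
    - every expansion can be regrouped by monomials into the power series of the
      map, so a map with an expansion of weight [W] lies in [A_ρ] with norm [≤ W];
      conversely the power series is an expansion (so the norm, well defined by the
      identity theorem for power series, is attained);
    - maps with expansions are closed under sums, scalar multiples, coordinate
      projections, products (Cauchy products) and absolutely convergent series;
    - [b_k(g_1,…,g_k)] is the symmetrisation of [Σ_{|α|=k} η_α Π_t (g_t)_{j_t}],
      a combination of products of coordinate functions, so its norm is at most
      [c_k W^k] when all [‖g_t‖ ≤ W], with [c_k = Σ_{|α|=k} ‖η_α‖]; on the
      diagonal it is the homogeneous part of degree [k] of [f] evaluated at [g].
    The theorem then follows: [f ∘ g = Σ_k b_k(g,…,g)] is a series of maps whose
    weights [c_k ρ^k] add up to [‖f‖_ρ], and [‖b_k‖ ≤ c_k]. *)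

From Stdlib Require Import Reals List Arith Lia Lra Psatz ClassicalEpsilon Permutation ListDec.
Import ListNotations.
Open Scope R_scope.

Lemma Ceq (x y : C) : fst x = fst y -> snd x = snd y -> x = y.
Proof. destruct x, y; simpl; intros; subst; reflexivity. Qed.

Lemma C_ring : ring_theory C0 C1 Cadd Cmul Csub Copp (@eq C).
Proof.
  constructor; intros; apply Ceq; unfold C0, C1, Cadd, Cmul, Csub, Copp; simpl; ring.
Qed.
Add Ring Cring : C_ring.

Lemma Cmod_ge0 x : 0 <= Cmod x.
Proof. apply sqrt_pos. Qed.

Lemma Cmod_mul x y : Cmod (Cmul x y) = Cmod x * Cmod y.
Proof.
  destruct x as [a b], y as [c d]; unfold Cmod, Cmul; simpl.
  rewrite <- sqrt_mult by nra. f_equal; ring.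
Qed.

Lemma Cmod_add x y : Cmod (Cadd x y) <= Cmod x + Cmod y.
Proof.
  destruct x as [a b], y as [c d]; unfold Cmod, Cadd; simpl.
  pose proof (sqrt_cauchy a b c d) as H. unfold Rsqr in H.
  pose proof (sqrt_pos (a*a+b*b)). pose proof (sqrt_pos (c*c+d*d)).
  rewrite <- (sqrt_square (sqrt (a * a + b * b) + sqrt (c * c + d * d))) by lra.
  apply sqrt_le_1_alt.
  pose proof (sqrt_sqrt (a*a+b*b)). pose proof (sqrt_sqrt (c*c+d*d)). nra.
Qed.

Lemma Cmod_fst x : Rabs (fst x) <= Cmod x.
Proof.
  destruct x as [a b]; unfold Cmod; simpl.
  rewrite <- sqrt_Rsqr_abs. apply sqrt_le_1_alt. unfold Rsqr; nra.
Qed.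

Lemma Cmod_snd x : Rabs (snd x) <= Cmod x.
Proof.
  destruct x as [a b]; unfold Cmod; simpl.
  rewrite <- sqrt_Rsqr_abs. apply sqrt_le_1_alt. unfold Rsqr; nra.
Qed.

Lemma Cmod_le_abs x : Cmod x <= Rabs (fst x) + Rabs (snd x).
Proof.
  destruct x as [a b]; unfold Cmod; simpl.
  rewrite <- (sqrt_square (Rabs a + Rabs b))
    by (pose proof (Rabs_pos a); pose proof (Rabs_pos b); lra).
  apply sqrt_le_1_alt.
  unfold Rabs; destruct (Rcase_abs a), (Rcase_abs b); nra.
Qed.

Lemma Cmod_C0 : Cmod C0 = 0.
Proof. unfold Cmod, C0; simpl. replace (0*0+0*0) with 0 by ring. apply sqrt_0. Qed.

Lemma Cmod_C1 : Cmod C1 = 1.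
Proof. unfold Cmod, C1; simpl. replace (1*1+0*0) with 1 by ring. apply sqrt_1. Qed.

Lemma Cmod_pow x n : Cmod (Cpow x n) = Cmod x ^ n.
Proof. induction n; simpl. apply Cmod_C1. rewrite Cmod_mul, IHn; ring. Qed.

Lemma Cmod_sub_sym x y : Cmod (Csub x y) = Cmod (Csub y x).
Proof. unfold Cmod, Csub, Cadd, Copp; simpl. f_equal; ring. Qed.

Lemma Cpow_add x a b : Cpow x (a + b) = Cmul (Cpow x a) (Cpow x b).
Proof. induction a; simpl. ring. rewrite IHa; ring. Qed.

Definition Cr (t : R) : C := (t, 0).

Lemma Cmod_Cr t : Cmod (Cr t) = Rabs t.
Proof. unfold Cmod, Cr; simpl. rewrite <- sqrt_Rsqr_abs. f_equal. unfold Rsqr; ring. Qed.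

Lemma Cr_mul a b : Cmul (Cr a) (Cr b) = Cr (a * b).
Proof. apply Ceq; unfold Cr, Cmul; simpl; ring. Qed.

Lemma Cpow_Cr u j : Cpow (Cr u) j = Cr (u ^ j).
Proof. induction j; simpl. reflexivity. rewrite IHj, Cr_mul. reflexivity. Qed.

Lemma Cpow_Cr_mul t x n : Cpow (Cmul (Cr t) x) n = Cmul (Cr (t ^ n)) (Cpow x n).
Proof.
  induction n; simpl. apply Ceq; unfold Cr, C1, Cmul; simpl; ring.
  rewrite IHn. apply Ceq; unfold Cr, Cmul; simpl; ring.
Qed.

Lemma Cr_fst t x : fst (Cmul (Cr t) x) = t * fst x.
Proof. unfold Cr, Cmul; simpl; ring. Qed.

Lemma Cr_snd t x : snd (Cmul (Cr t) x) = t * snd x.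
Proof. unfold Cr, Cmul; simpl; ring. Qed.

Lemma Clsum_cons a l : Clsum (a :: l) = Cadd a (Clsum l).
Proof. reflexivity. Qed.

Lemma Clsum_app l1 l2 : Clsum (l1 ++ l2) = Cadd (Clsum l1) (Clsum l2).
Proof. induction l1; simpl. unfold Clsum; simpl; ring. unfold Clsum in *; simpl; rewrite IHl1; ring. Qed.

Lemma Clsum_map_add {A} (f g : A -> C) l :
  Clsum (map (fun x => Cadd (f x) (g x)) l) = Cadd (Clsum (map f l)) (Clsum (map g l)).
Proof. induction l; cbn [map]. unfold Clsum; simpl; ring. rewrite !Clsum_cons, IHl; ring. Qed.

Lemma Clsum_map_sub {A} (f g : A -> C) l :
  Clsum (map (fun x => Csub (f x) (g x)) l) = Csub (Clsum (map f l)) (Clsum (map g l)).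
Proof. induction l; cbn [map]. unfold Clsum; simpl; ring. rewrite !Clsum_cons, IHl; ring. Qed.

Lemma Clsum_map_mull {A} (a : C) (f : A -> C) l :
  Clsum (map (fun x => Cmul a (f x)) l) = Cmul a (Clsum (map f l)).
Proof. induction l; cbn [map]. unfold Clsum; simpl; ring. rewrite !Clsum_cons, IHl; ring. Qed.

Lemma Clsum_map_ext {A} (f g : A -> C) l :
  (forall x, In x l -> f x = g x) -> Clsum (map f l) = Clsum (map g l).
Proof. intro H. f_equal. apply map_ext_in. exact H. Qed.

Lemma Clsum_map_zero {A} (f : A -> C) l :
  (forall x, In x l -> f x = C0) -> Clsum (map f l) = C0.
Proof.
  induction l; cbn [map]; intros H. reflexivity.
  rewrite Clsum_cons, (H a (or_introl eq_refl)), IHl by (intros; apply H; right; assumption). ring.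
Qed.

Lemma Clsum_flat_map {A B} (g : A -> list B) (f : B -> C) l :
  Clsum (map f (flat_map g l)) = Clsum (map (fun a => Clsum (map f (g a))) l).
Proof. induction l; cbn [map flat_map]. reflexivity. rewrite map_app, Clsum_app, Clsum_cons, IHl. reflexivity. Qed.

Lemma Clsum_const {A} (c : C) (L : list A) : Clsum (map (fun _ => c) L) = Cmul (Cr (INR (length L))) c.
Proof.
  induction L; cbn [map length]. apply Ceq; unfold Cr, Cmul, Clsum; simpl; ring.
  rewrite Clsum_cons, IHL, S_INR. apply Ceq; unfold Cr, Cmul, Cadd; simpl; ring.
Qed.

Lemma Clsum_perm (L1 L2 : list C) : Permutation L1 L2 -> Clsum L1 = Clsum L2.
Proof. induction 1; unfold Clsum in *; simpl; auto. rewrite IHPermutation; auto. ring. congruence. Qed.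

Lemma Clsum_swap {A B} (F : A -> B -> C) (LA : list A) (LB : list B) :
  Clsum (map (fun a => Clsum (map (fun b => F a b) LB)) LA) =
  Clsum (map (fun b => Clsum (map (fun a => F a b) LA)) LB).
Proof.
  induction LA; cbn [map].
  - rewrite Clsum_map_zero; auto.
  - rewrite Clsum_cons, IHLA. rewrite <- Clsum_map_add. apply Clsum_map_ext. intros. reflexivity.
Qed.

Definition Rlsum (l : list R) : R := fold_right Rplus 0 l.

Lemma Rlsum_app l1 l2 : Rlsum (l1 ++ l2) = Rlsum l1 + Rlsum l2.
Proof. induction l1; simpl. ring. unfold Rlsum in *; simpl; rewrite IHl1; ring. Qed.

Lemma Rlsum_map_add {A} (f g : A -> R) l :
  Rlsum (map (fun x => f x + g x) l) = Rlsum (map f l) + Rlsum (map g l).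
Proof. induction l; simpl. unfold Rlsum; simpl; ring. unfold Rlsum in *; simpl; rewrite IHl; ring. Qed.

Lemma Rlsum_map_mull {A} (a : R) (f : A -> R) l :
  Rlsum (map (fun x => a * f x) l) = a * Rlsum (map f l).
Proof. induction l; simpl. unfold Rlsum; simpl; ring. unfold Rlsum in *; simpl; rewrite IHl; ring. Qed.

Lemma Rlsum_le {A} (f g : A -> R) l :
  (forall x, In x l -> f x <= g x) -> Rlsum (map f l) <= Rlsum (map g l).
Proof.
  induction l; simpl; intros H. unfold Rlsum; simpl; lra.
  unfold Rlsum in *; simpl. pose proof (H a (or_introl eq_refl)).
  pose proof (IHl (fun x h => H x (or_intror h))). lra.
Qed.

Lemma Rlsum_ge0 {A} (f : A -> R) l :
  (forall x, In x l -> 0 <= f x) -> 0 <= Rlsum (map f l).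
Proof.
  induction l; simpl; intros H. unfold Rlsum; simpl; lra.
  unfold Rlsum in *; simpl. pose proof (H a (or_introl eq_refl)).
  pose proof (IHl (fun x h => H x (or_intror h))). lra.
Qed.

Lemma Rlsum_flat_map {A B} (g : A -> list B) (f : B -> R) l :
  Rlsum (map f (flat_map g l)) = Rlsum (map (fun a => Rlsum (map f (g a))) l).
Proof. induction l; simpl. reflexivity. rewrite map_app, Rlsum_app, IHl. reflexivity. Qed.

Lemma Rlsum_map_ext {A} (f g : A -> R) l :
  (forall x, In x l -> f x = g x) -> Rlsum (map f l) = Rlsum (map g l).
Proof. intro H. f_equal. apply map_ext_in. exact H. Qed.

Lemma Rlsum_const {A} (c : R) (l : list A) : Rlsum (map (fun _ => c) l) = INR (length l) * c.
Proof.
  induction l; cbn [map length]. unfold Rlsum; simpl; ring.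
  unfold Rlsum in *; cbn [fold_right]; rewrite IHl. rewrite (S_INR (length l)). ring.
Qed.

Lemma Rlsum_seq f p : Rlsum (map f (seq 0 (S p))) = sum_f_R0 f p.
Proof.
  induction p. unfold Rlsum; simpl; ring.
  rewrite (seq_S (S p)), map_app, Rlsum_app, IHp. rewrite tech5. unfold Rlsum; simpl; ring.
Qed.

Lemma Rlsum_swap {A B} (F : A -> B -> R) (LA : list A) (LB : list B) :
  Rlsum (map (fun a => Rlsum (map (fun b => F a b) LB)) LA) =
  Rlsum (map (fun b => Rlsum (map (fun a => F a b) LA)) LB).
Proof.
  induction LA; cbn [map].
  - unfold Rlsum; simpl. induction LB; simpl; [reflexivity| rewrite <- IHLB; ring].
  - unfold Rlsum at 1. cbn [fold_right].
    fold (Rlsum (map (fun a0 => Rlsum (map (fun b => F a0 b) LB)) LA)).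
    rewrite IHLA. rewrite <- Rlsum_map_add. apply Rlsum_map_ext. intros. reflexivity.
Qed.

Lemma Cmod_Clsum {A} (f : A -> C) l :
  Cmod (Clsum (map f l)) <= Rlsum (map (fun x => Cmod (f x)) l).
Proof.
  induction l; cbn [map]. unfold Clsum; simpl. rewrite Cmod_C0. unfold Rlsum; simpl; lra.
  rewrite Clsum_cons. unfold Rlsum in *; cbn [fold_right].
  pose proof (Cmod_add (f a) (Clsum (map f l))). lra.
Qed.

Lemma Csum_seq f k : Csum f k = Clsum (map f (seq 0 (S k))).
Proof.
  induction k. unfold Clsum; simpl; ring.
  rewrite (seq_S (S k)), map_app, Clsum_app. simpl Csum. rewrite IHk. simpl. unfold Clsum; simpl. ring.
Qed.

Lemma Un_cv_ext (u v : nat -> R) l : (forall n, u n = v n) -> Un_cv u l -> Un_cv v l.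
Proof. intros H Hu e he. destruct (Hu e he) as [N HN]. exists N. intros. rewrite <- H. auto. Qed.

Lemma Un_cv_ext_ev (u v : nat -> R) l N0 :
  (forall n, (n >= N0)%nat -> u n = v n) -> Un_cv u l -> Un_cv v l.
Proof.
  intros H Hu e he. destruct (Hu e he) as [N HN]. exists (max N N0).
  intros. rewrite <- H by lia. apply HN; lia.
Qed.

Lemma Un_cv_const c : Un_cv (fun _ => c) c.
Proof. intros e he; exists 0%nat; intros; unfold Rdist; rewrite Rminus_diag, Rabs_R0; lra. Qed.

Lemma Un_cv_squeeze0 (u v : nat -> R) : (forall n, 0 <= u n <= v n) -> Un_cv v 0 -> Un_cv u 0.
Proof.
  intros H Hv e he. destruct (Hv e he) as [N HN]. exists N. intros n hn. specialize (HN n hn).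
  unfold Rdist in *. rewrite Rminus_0_r in *. pose proof (H n). rewrite Rabs_right in * by lra. lra.
Qed.

Lemma lim_dist_bound (u : nat -> R) L c X N0 :
  Un_cv u L -> (forall n, (n >= N0)%nat -> Rabs (u n - c) <= X) -> Rabs (L - c) <= X.
Proof.
  intros Hu H. destruct (Rle_lt_dec (Rabs (L - c)) X) as [h|h]; auto.
  destruct (Hu (Rabs (L - c) - X)) as [N HN]. lra.
  specialize (HN (max N N0) ltac:(lia)). specialize (H (max N N0) ltac:(lia)). unfold Rdist in HN.
  pose proof (Rabs_triang (L - u (max N N0)) (u (max N N0) - c)).
  replace (L - u (max N N0) + (u (max N N0) - c)) with (L - c) in H0 by ring.
  rewrite Rabs_minus_sym in HN. lra.
Qed.

Lemma eventually_finitely_many (P : nat -> nat -> Prop) K :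
  (forall k, (k <= K)%nat -> exists N, forall n, (n >= N)%nat -> P k n) ->
  exists M, forall k, (k <= K)%nat -> forall n, (n >= M)%nat -> P k n.
Proof.
  induction K; intros H.
  - destruct (H 0%nat (le_n _)) as [N HN]. exists N. intros k hk n hn. replace k with 0%nat by lia. auto.
  - destruct IHK as [M HM]. intros; apply H; lia. destruct (H (S K) (le_n _)) as [N HN].
    exists (max M N). intros k hk n hn. destruct (Nat.eq_dec k (S K)). subst; apply HN; lia. apply HM; lia.
Qed.

Lemma sum_const (c : R) K : sum_f_R0 (fun _ => c) K = INR (S K) * c.
Proof. induction K. simpl; ring. rewrite tech5, IHK. rewrite (S_INR (S K)). ring. Qed.

Lemma sum_truncate (f : nat -> R) K P : (K <= P)%nat ->
  sum_f_R0 (fun k => if (k <=? K)%nat then f k else 0) P = sum_f_R0 f K.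
Proof.
  intro H. induction H.
  - apply sum_eq. intros i hi. destruct (Nat.leb_spec i K); [reflexivity| lia].
  - rewrite tech5, IHle. destruct (Nat.leb_spec (S m) K); [lia|ring].
Qed.

Lemma sum_delta (x : R) n N : (n <= N)%nat -> sum_f_R0 (fun k => if (k =? n)%nat then x else 0) N = x.
Proof.
  intro h. induction h.
  - destruct n. simpl. reflexivity. rewrite tech5. rewrite Nat.eqb_refl.
    rewrite (sum_eq _ (fun _ => 0)). rewrite sum_const. ring.
    intros i hi. destruct (Nat.eqb_spec i (S n)); [lia|auto].
  - rewrite tech5, IHh. destruct (Nat.eqb_spec (S m) n); [lia|ring].
Qed.

Lemma partial_sum_mono (a : nat -> R) N N' :
  (forall n, 0 <= a n) -> (N <= N')%nat -> sum_f_R0 a N <= sum_f_R0 a N'.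
Proof. intros H h. induction h. lra. rewrite tech5. pose proof (H (S m)). lra. Qed.

(** Summing the triangle [{(k, n) : k + n ≤ P}] by diagonals or by rows. *)
Lemma sum_diagonal_reindex (a : nat -> nat -> R) P :
  sum_f_R0 (fun p => sum_f_R0 (fun k => a k (p - k)%nat) p) P =
  sum_f_R0 (fun k => sum_f_R0 (a k) (P - k)) P.
Proof.
  induction P.
  - simpl. reflexivity.
  - rewrite (tech5 (fun p => sum_f_R0 (fun k => a k (p - k)%nat) p)), IHP.
    rewrite (tech5 (fun k => sum_f_R0 (a k) (S P - k))). rewrite Nat.sub_diag.
    rewrite (tech5 (fun k => a k (S P - k)%nat)). rewrite Nat.sub_diag.
    replace (sum_f_R0 (fun k => sum_f_R0 (a k) (S P - k)) P)
      with (sum_f_R0 (fun k => sum_f_R0 (a k) (P - k) + a k (S P - k)%nat) P).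
    2:{ apply sum_eq. intros i hi. replace (S P - i)%nat with (S (P - i)) by lia. rewrite tech5. reflexivity. }
    rewrite plus_sum. simpl (sum_f_R0 (a (S P)) 0). ring.
Qed.

Lemma partial_sum_le (a : nat -> R) A N :
  (forall n, 0 <= a n) -> infinite_sum a A -> sum_f_R0 a N <= A.
Proof. intros H HA. apply sum_incr; auto. Qed.

Lemma series_ge0 (a : nat -> R) A : (forall n, 0 <= a n) -> infinite_sum a A -> 0 <= A.
Proof. intros H HA. pose proof (partial_sum_le a A 0 H HA). simpl in H0. pose proof (H 0%nat). lra. Qed.

Lemma series_unique (a : nat -> R) A B : infinite_sum a A -> infinite_sum a B -> A = B.
Proof. intros. eapply UL_sequence; eauto. Qed.

Lemma series_le (a b : nat -> R) A B :
  (forall n, a n <= b n) -> infinite_sum a A -> infinite_sum b B -> A <= B.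
Proof.
  intros H HA HB. apply Rle_cv_lim with (fun N => sum_f_R0 a N) (fun N => sum_f_R0 b N); auto.
  intro n. apply sum_Rle. auto.
Qed.

Lemma series_bounded_cv (a : nat -> R) B :
  (forall n, 0 <= a n) -> (forall N, sum_f_R0 a N <= B) -> exists A, infinite_sum a A /\ A <= B.
Proof.
  intros H HB. destruct (growing_cv (fun N => sum_f_R0 a N)) as [l Hl].
  - intro n. simpl. pose proof (H (S n)). lra.
  - exists B. intros x [n ->]. apply HB.
  - exists l. split. exact Hl. apply Rle_cv_lim with (fun N => sum_f_R0 a N) (fun _ => B); auto.
    apply Un_cv_const.
Qed.

Lemma series_comparison (a b : nat -> R) B :
  (forall n, 0 <= a n <= b n) -> infinite_sum b B -> exists A, infinite_sum a A /\ A <= B.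
Proof.
  intros H HB. apply series_bounded_cv. intro n; apply H. intro N.
  apply Rle_trans with (sum_f_R0 b N). apply sum_Rle. intros; apply H.
  apply partial_sum_le; auto. intro n; pose proof (H n); lra.
Qed.

Lemma series_dominated_cv (u a : nat -> R) (A : R) :
  (forall n, Rabs (u n) <= a n) -> infinite_sum a A -> exists U, infinite_sum u U.
Proof.
  intros H HA.
  destruct (series_comparison (fun n => Rabs (u n)) a A) as [l1 [H1 _]]; auto.
  { intro n. split. apply Rabs_pos. apply H. }
  destruct (series_comparison (fun n => u n + Rabs (u n)) (fun n => 2 * a n) (2 * A)) as [l2 [H2 _]].
  { intro n. pose proof (H n). unfold Rabs in *; destruct (Rcase_abs (u n)); lra. }
  { unfold infinite_sum. apply Un_cv_ext with (fun N => 2 * sum_f_R0 a N).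
    intro n. rewrite scal_sum. apply sum_eq. intros; ring.
    apply CV_mult. apply Un_cv_const. exact HA. }
  exists (l2 - l1). unfold infinite_sum.
  apply Un_cv_ext with (fun N => sum_f_R0 (fun n => u n + Rabs (u n)) N - sum_f_R0 (fun n => Rabs (u n)) N).
  { intro n. rewrite <- minus_sum. apply sum_eq. intros; ring. }
  apply CV_minus; assumption.
Qed.

Lemma series_tail_le (u a : nat -> R) (U A : R) N :
  (forall n, Rabs (u n) <= a n) -> infinite_sum a A -> infinite_sum u U ->
  Rabs (U - sum_f_R0 u N) <= A - sum_f_R0 a N.
Proof. intros H HA HU. apply (sum_maj1 (fun n _ => u n) a 0); auto. Qed.

Lemma series_abs_le (u a : nat -> R) (U A : R) :
  (forall n, Rabs (u n) <= a n) -> infinite_sum a A -> infinite_sum u U -> Rabs U <= A.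
Proof. intros H HA HU. apply (sum_cv_maj a (fun n _ => u n) 0); auto. Qed.

Lemma series_rest_cv0 (a : nat -> R) A : infinite_sum a A -> Un_cv (fun n => A - sum_f_R0 a n) 0.
Proof.
  intros H e he. destruct (H e he) as [N HN]. exists N. intros n hn. specialize (HN n hn).
  unfold Rdist in *. rewrite Rminus_0_r. rewrite Rabs_minus_sym. exact HN.
Qed.

Lemma series_scal_l (u : nat -> R) U c : infinite_sum u U -> infinite_sum (fun n => c * u n) (c * U).
Proof.
  intros H. unfold infinite_sum in *.
  apply Un_cv_ext with (fun N => c * sum_f_R0 u N). intro n. rewrite scal_sum. apply sum_eq; intros; ring.
  apply CV_mult. apply Un_cv_const. exact H.
Qed.

Lemma series_scal_r (u : nat -> R) U c : infinite_sum u U -> infinite_sum (fun n => u n * c) (U * c).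
Proof.
  intro H. rewrite Rmult_comm. eapply Un_cv_ext. 2: apply (series_scal_l u U c H).
  intro n. apply sum_eq; intros; ring.
Qed.

Lemma series_add (u v : nat -> R) U V :
  infinite_sum u U -> infinite_sum v V -> infinite_sum (fun n => u n + v n) (U + V).
Proof.
  intros Hu Hv. unfold infinite_sum. eapply Un_cv_ext. intro n. symmetry. apply plus_sum.
  apply CV_plus; auto.
Qed.

Lemma series_lsum {A} (L : list A) (u : A -> nat -> R) (U : A -> R) :
  (forall x, In x L -> infinite_sum (u x) (U x)) ->
  infinite_sum (fun n => Rlsum (map (fun x => u x n) L)) (Rlsum (map U L)).
Proof.
  induction L; intros H; cbn [map].
  - unfold Rlsum; simpl. unfold infinite_sum. apply Un_cv_ext with (fun _ => 0). intro n.
    induction n; simpl; [reflexivity| rewrite <- IHn; ring]. apply Un_cv_const.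
  - apply (series_add (u a) (fun n => Rlsum (map (fun x => u x n) L))).
    apply H; left; auto. apply IHL. intros; apply H; right; auto.
Qed.

Lemma series_drop (a : nat -> R) A n : infinite_sum a A ->
  infinite_sum (fun k => if (k <=? n)%nat then 0 else a k) (A - sum_f_R0 a n).
Proof.
  intro H. unfold infinite_sum. apply Un_cv_ext_ev with (fun N => sum_f_R0 a N - sum_f_R0 a n) n.
  - intros N hN. rewrite <- (sum_truncate a n N) by lia. rewrite <- minus_sum.
    apply sum_eq. intros k _. destruct (k <=? n)%nat; ring.
  - apply CV_minus. auto. apply Un_cv_const.
Qed.

Lemma series_finite (b : nat -> R) k :
  (forall j, (j > k)%nat -> b j = 0) -> infinite_sum b (sum_f_R0 b k).
Proof.
  intros H. unfold infinite_sum. apply Un_cv_ext_ev with (fun _ => sum_f_R0 b k) k. 2: apply Un_cv_const.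
  intros n hn. induction hn. auto. rewrite tech5, <- IHhn, H by lia. ring.
Qed.

(** If [Σ_n w k n = W k] and [Σ_k W k] converges, then the rests
    [W k - Σ_{n ≤ P-k} w k n], summed over [k ≤ P], tend to [0]: each fixed
    row has a vanishing rest, and the rows [k > K] contribute at most the
    rest of [Σ_k W k]. *)
Lemma diagonal_rests_cv0 (w : nat -> nat -> R) (W : nat -> R) (Wt : R) :
  (forall k n, 0 <= w k n) -> (forall k, infinite_sum (w k) (W k)) -> infinite_sum W Wt ->
  Un_cv (fun P => sum_f_R0 (fun k => W k - sum_f_R0 (w k) (P - k)) P) 0.
Proof.
  intros Hw0 Hw HW.
  set (q := fun k N => W k - sum_f_R0 (w k) N).
  assert (HW0 : forall k, 0 <= W k) by (intro k; apply (series_ge0 (w k)); auto).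
  assert (Hq0 : forall k N, 0 <= q k N)
    by (intros; unfold q; pose proof (partial_sum_le (w k) (W k) N (Hw0 k) (Hw k)); lra).
  assert (HqW : forall k N, q k N <= W k)
    by (intros; unfold q; assert (0 <= sum_f_R0 (w k) N) by (apply cond_pos_sum; auto); lra).
  intros e he.
  destruct (series_rest_cv0 W Wt HW (e/2)) as [K HK]. lra.
  specialize (HK K (le_n _)). unfold Rdist in HK. rewrite Rminus_0_r in HK.
  set (d := e / (2 * (INR K + 1))).
  assert (hd : 0 < d). { unfold d. apply Rdiv_lt_0_compat. lra. pose proof (pos_INR K). lra. }
  destruct (eventually_finitely_many (fun k n => q k n < d) K) as [M HM].
  { intros k hk. destruct (series_rest_cv0 (w k) (W k) (Hw k) d hd) as [N HN]. exists N. intros n hn.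
    specialize (HN n hn). unfold Rdist in HN. rewrite Rminus_0_r in HN. unfold q.
    pose proof (Rle_abs (W k - sum_f_R0 (w k) n)). lra. }
  exists (K + M)%nat. intros P hP. unfold Rdist. rewrite Rminus_0_r.
  rewrite Rabs_right by (apply Rle_ge, cond_pos_sum; intro k; apply (Hq0 k)).
  apply Rle_lt_trans with
    (sum_f_R0 (fun k => (if (k <=? K)%nat then d else 0) + (if (k <=? K)%nat then 0 else W k)) P).
  { apply sum_Rle. intros k hk. destruct (Nat.leb_spec k K).
    - pose proof (HM k H (P - k)%nat ltac:(lia)). unfold q in *. lra.
    - pose proof (HqW k (P - k)%nat). unfold q in *. lra. }
  rewrite plus_sum. rewrite sum_truncate by lia.
  assert (E: sum_f_R0 (fun k => if (k <=? K)%nat then 0 else W k) P = sum_f_R0 W P - sum_f_R0 W K).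
  { rewrite <- (sum_truncate W K P) by lia. rewrite <- minus_sum.
    apply sum_eq. intros i hi. destruct (i <=? K)%nat; ring. }
  rewrite E. pose proof (partial_sum_le W Wt P HW0 HW).
  rewrite sum_const.
  assert (INR (S K) * d = e/2) by (unfold d; rewrite S_INR; field; pose proof (pos_INR K); lra).
  pose proof (Rle_abs (Wt - sum_f_R0 W K)). lra.
Qed.

Lemma diagonal_series_real (a w : nat -> nat -> R) (W Sv : nat -> R) (Wt : R) :
  (forall k n, Rabs (a k n) <= w k n) -> (forall k, infinite_sum (w k) (W k)) -> infinite_sum W Wt ->
  (forall k, infinite_sum (a k) (Sv k)) ->
  exists St, infinite_sum Sv St /\
             infinite_sum (fun p => sum_f_R0 (fun k => a k (p - k)%nat) p) St.
Proof.
  intros Haw Hw HW Ha.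
  assert (Hw0 : forall k n, 0 <= w k n)
    by (intros k n; pose proof (Haw k n); pose proof (Rabs_pos (a k n)); lra).
  assert (HSW : forall k, Rabs (Sv k) <= W k) by (intro k; apply (series_abs_le (a k) (w k)); auto).
  destruct (series_dominated_cv Sv W Wt HSW HW) as [St HSt]. exists St. split. exact HSt.
  set (D := fun P => sum_f_R0 (fun p => sum_f_R0 (fun k => a k (p - k)%nat) p) P).
  set (Q := fun P => sum_f_R0 (fun k => W k - sum_f_R0 (w k) (P - k)) P).
  assert (Hdiff : forall P, Rabs (D P - sum_f_R0 Sv P) <= Q P).
  { intro P. unfold D, Q. rewrite sum_diagonal_reindex. rewrite Rabs_minus_sym, <- minus_sum.
    eapply Rle_trans. apply sum_f_R0_triangle. apply sum_Rle. intros k hk.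
    apply (series_tail_le (a k) (w k)); auto. }
  assert (HQ : Un_cv Q 0) by (apply (diagonal_rests_cv0 w W Wt); auto).
  intros e he. destruct (HSt (e/2)) as [N1 HN1]. lra. destruct (HQ (e/2)) as [N2 HN2]. lra.
  exists (max N1 N2). intros n hn. specialize (HN1 n ltac:(lia)). specialize (HN2 n ltac:(lia)).
  specialize (Hdiff n). fold (D n). unfold Rdist in *. rewrite Rminus_0_r in HN2.
  pose proof (Rle_abs (Q n)).
  pose proof (Rabs_triang (sum_f_R0 Sv n - St) (D n - sum_f_R0 Sv n)).
  replace (D n - St) with ((sum_f_R0 Sv n - St) + (D n - sum_f_R0 Sv n)) by ring.
  lra.
Qed.

Lemma vnorm_ge0 s v : 0 <= vnorm s v.
Proof. induction s; simpl. lra. eapply Rle_trans. exact IHs. apply Rmax_l. Qed.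

Lemma vnorm_comp s v i : (i < s)%nat -> Cmod (v i) <= vnorm s v.
Proof.
  induction s; intro H. lia. simpl. destruct (Nat.eq_dec i s). subst. apply Rmax_r.
  eapply Rle_trans. apply IHs; lia. apply Rmax_l.
Qed.

Lemma vnorm_lub s v X : 0 <= X -> (forall i, (i < s)%nat -> Cmod (v i) <= X) -> vnorm s v <= X.
Proof. induction s; intros H0 H; simpl. lra. apply Rmax_lub. apply IHs; auto. apply H; lia. Qed.

Lemma vnorm_ext s u v : (forall i, (i < s)%nat -> u i = v i) -> vnorm s u = vnorm s v.
Proof. induction s; intros H; simpl. reflexivity. rewrite IHs by (intros; apply H; lia). rewrite H by lia. reflexivity. Qed.

Lemma vnorm_scal s a v : vnorm s (fun i => Cmul a (v i)) = Cmod a * vnorm s v.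
Proof. induction s; simpl. ring. rewrite IHs, Cmod_mul. rewrite RmaxRmult by apply Cmod_ge0. reflexivity. Qed.

Lemma vnorm_add s u v : vnorm s (fun i => Cadd (u i) (v i)) <= vnorm s u + vnorm s v.
Proof.
  apply vnorm_lub. pose proof (vnorm_ge0 s u); pose proof (vnorm_ge0 s v); lra.
  intros i hi. eapply Rle_trans. apply Cmod_add.
  pose proof (vnorm_comp s u i hi); pose proof (vnorm_comp s v i hi); lra.
Qed.

Lemma vnorm_zero s : vnorm s (fun _ => C0) = 0.
Proof. apply Rle_antisym. apply vnorm_lub. lra. intros; rewrite Cmod_C0; lra. apply vnorm_ge0. Qed.

Lemma vnorm_one v : vnorm 1 v = Cmod (v 0%nat).
Proof. simpl. apply Rmax_right. apply Cmod_ge0. Qed.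

Lemma fst_Csum u n : fst (Csum u n) = sum_f_R0 (fun k => fst (u k)) n.
Proof. induction n; simpl; auto. rewrite IHn. reflexivity. Qed.

Lemma snd_Csum u n : snd (Csum u n) = sum_f_R0 (fun k => snd (u k)) n.
Proof. induction n; simpl; auto. rewrite IHn. reflexivity. Qed.

Definition Cser (u : nat -> C) (L : C) : Prop := Ccv (fun n => Csum u n) L.

Lemma Cser_iff u L :
  Cser u L <-> infinite_sum (fun k => fst (u k)) (fst L) /\ infinite_sum (fun k => snd (u k)) (snd L).
Proof.
  unfold Cser, Ccv, infinite_sum. split; intros [H1 H2]; split.
  - intros e he; destruct (H1 e he) as [N HN]; exists N; intros; rewrite <- fst_Csum; auto.
  - intros e he; destruct (H2 e he) as [N HN]; exists N; intros; rewrite <- snd_Csum; auto.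
  - intros e he; destruct (H1 e he) as [N HN]; exists N; intros; rewrite fst_Csum; auto.
  - intros e he; destruct (H2 e he) as [N HN]; exists N; intros; rewrite snd_Csum; auto.
Qed.

Lemma Ccv_unique u L1 L2 : Ccv u L1 -> Ccv u L2 -> L1 = L2.
Proof. intros [a b] [c d]. apply Ceq; eapply UL_sequence; eauto. Qed.

Lemma Ccv_ext_ev u v L N0 : (forall n, (n >= N0)%nat -> u n = v n) -> Ccv u L -> Ccv v L.
Proof.
  intros H [a b].
  split; [apply Un_cv_ext_ev with (fun n => fst (u n)) N0 | apply Un_cv_ext_ev with (fun n => snd (u n)) N0];
    auto; intros; rewrite H; auto.
Qed.

Lemma Ccv_ext u v L : (forall n, u n = v n) -> Ccv u L -> Ccv v L.
Proof. intros H. apply Ccv_ext_ev with 0%nat. auto. Qed.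

Lemma Ccv_const c : Ccv (fun _ => c) c.
Proof. split; apply Un_cv_const. Qed.

Lemma Ccv_add u v L M : Ccv u L -> Ccv v M -> Ccv (fun n => Cadd (u n) (v n)) (Cadd L M).
Proof. intros [a b] [c d]. split; simpl; apply CV_plus; auto. Qed.

Lemma Ccv_sub u v L M : Ccv u L -> Ccv v M -> Ccv (fun n => Csub (u n) (v n)) (Csub L M).
Proof. intros Hu [c d]. apply Ccv_add; auto. split; simpl; apply CV_opp; auto. Qed.

Lemma Ccv_scal c u L : Ccv u L -> Ccv (fun n => Cmul c (u n)) (Cmul c L).
Proof.
  intros [a b]. destruct (Ccv_const c) as [c1 c2].
  split; simpl; [apply CV_minus|apply CV_plus]; apply CV_mult; auto.
Qed.

Lemma Ccv_cmod u L :
  Ccv u L -> forall e, e > 0 -> exists N, forall n, (n >= N)%nat -> Cmod (Csub (u n) L) < e.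
Proof.
  intros [a b] e he. destruct (a (e/2)) as [N1 H1]. lra. destruct (b (e/2)) as [N2 H2]. lra.
  exists (max N1 N2). intros n hn. specialize (H1 n ltac:(lia)). specialize (H2 n ltac:(lia)).
  unfold Rdist in *. eapply Rle_lt_trans. apply Cmod_le_abs.
  unfold Csub, Cadd, Copp; simpl. unfold Rminus in *. lra.
Qed.

Lemma Ccv_bound u L X : Ccv u L -> (forall n, Cmod (u n) <= X) -> Cmod L <= X.
Proof.
  intros Hu H. destruct (Rle_lt_dec (Cmod L) X) as [h|h]; auto.
  destruct (Ccv_cmod u L Hu (Cmod L - X)) as [N HN]. lra.
  specialize (HN N (le_n _)). specialize (H N).
  assert (E : L = Cadd (Csub L (u N)) (u N)) by ring.
  pose proof (Cmod_add (Csub L (u N)) (u N)). rewrite <- E in H0.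
  rewrite Cmod_sub_sym in HN. lra.
Qed.

Lemma Csum_ext u v n : (forall k, (k <= n)%nat -> u k = v k) -> Csum u n = Csum v n.
Proof. induction n; intros H; simpl. apply H; lia. rewrite IHn, H; auto. Qed.

Lemma Csum_add u v n : Csum (fun k => Cadd (u k) (v k)) n = Cadd (Csum u n) (Csum v n).
Proof. induction n; simpl; auto. rewrite IHn; ring. Qed.

Lemma Csum_sub u v n : Csum (fun k => Csub (u k) (v k)) n = Csub (Csum u n) (Csum v n).
Proof. induction n; simpl; auto. rewrite IHn; ring. Qed.

Lemma Csum_scal c u n : Csum (fun k => Cmul c (u k)) n = Cmul c (Csum u n).
Proof. induction n; simpl; auto. rewrite IHn; ring. Qed.

Lemma Csum_zero n : Csum (fun _ => C0) n = C0.
Proof. induction n; simpl; auto. rewrite IHn; ring. Qed.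

Lemma Cmod_Csum u n : Cmod (Csum u n) <= sum_f_R0 (fun k => Cmod (u k)) n.
Proof. induction n; simpl. lra. eapply Rle_trans. apply Cmod_add. lra. Qed.

Lemma fsum_Csum (u : nat -> fn) n z i : fsum u n z i = Csum (fun k => u k z i) n.
Proof. induction n; simpl; auto. unfold fadd. rewrite IHn. reflexivity. Qed.

Lemma Csum_drop (u : nat -> C) n N : (n <= N)%nat ->
  Csum (fun k => if (k <=? n)%nat then C0 else u k) N = Csub (Csum u N) (Csum u n).
Proof.
  intro h. induction h.
  - rewrite (Csum_ext _ (fun _ => C0)). rewrite Csum_zero. ring.
    intros k hk. destruct (Nat.leb_spec k n); [auto|lia].
  - cbn [Csum]. rewrite IHh. destruct (Nat.leb_spec (S m) n). lia. ring.
Qed.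

Lemma Cser_add u v L M : Cser u L -> Cser v M -> Cser (fun k => Cadd (u k) (v k)) (Cadd L M).
Proof. unfold Cser; intros. eapply Ccv_ext. intro n; symmetry; apply Csum_add. apply Ccv_add; auto. Qed.

Lemma Cser_scal c u L : Cser u L -> Cser (fun k => Cmul c (u k)) (Cmul c L).
Proof. unfold Cser; intros. eapply Ccv_ext. intro n; symmetry; apply Csum_scal. apply Ccv_scal; auto. Qed.

Lemma Cser_unique u L M : Cser u L -> Cser u M -> L = M.
Proof. apply Ccv_unique. Qed.

Lemma Cser_lsum {A} (L : list A) (u : A -> nat -> C) (U : A -> C) :
  (forall x, In x L -> Cser (u x) (U x)) ->
  Cser (fun n => Clsum (map (fun x => u x n) L)) (Clsum (map U L)).
Proof.
  induction L; intros H; cbn [map].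
  - unfold Cser. eapply Ccv_ext. intro n. symmetry. apply Csum_zero. apply Ccv_const.
  - apply (Cser_add (u a) (fun n => Clsum (map (fun x => u x n) L))).
    apply H; left; auto. apply IHL. intros; apply H; right; auto.
Qed.

Lemma Cser_dominated (u : nat -> C) (a : nat -> R) A :
  (forall n, Cmod (u n) <= a n) -> infinite_sum a A -> exists U, Cser u U /\ Cmod U <= A.
Proof.
  intros H HA.
  destruct (series_dominated_cv (fun k => fst (u k)) a A) as [U1 H1]; auto.
  { intro n; eapply Rle_trans. apply Cmod_fst. auto. }
  destruct (series_dominated_cv (fun k => snd (u k)) a A) as [U2 H2]; auto.
  { intro n; eapply Rle_trans. apply Cmod_snd. auto. }
  exists (U1, U2). assert (Cser u (U1, U2)) by (apply Cser_iff; simpl; auto). split; auto.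
  apply Ccv_bound with (fun n => Csum u n); auto. intro n. eapply Rle_trans. apply Cmod_Csum.
  apply Rle_trans with (sum_f_R0 a n). apply sum_Rle; auto. apply partial_sum_le; auto.
  intro k. pose proof (H k). pose proof (Cmod_ge0 (u k)). lra.
Qed.

Lemma diagonal_series (a : nat -> nat -> C) (w : nat -> nat -> R) (W : nat -> R) (Wt : R) (Sv : nat -> C) :
  (forall k n, Cmod (a k n) <= w k n) -> (forall k, infinite_sum (w k) (W k)) -> infinite_sum W Wt ->
  (forall k, Cser (a k) (Sv k)) ->
  exists St, Cser Sv St /\ Cser (fun p => Csum (fun k => a k (p - k)%nat) p) St.
Proof.
  intros Haw Hw HW Ha.
  destruct (diagonal_series_real (fun k n => fst (a k n)) w W (fun k => fst (Sv k)) Wt) as [S1 [H1 H1']]; auto.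
  { intros; eapply Rle_trans; [apply Cmod_fst|auto]. }
  { intro k. apply (proj1 (Cser_iff _ _) (Ha k)). }
  destruct (diagonal_series_real (fun k n => snd (a k n)) w W (fun k => snd (Sv k)) Wt) as [S2 [H2 H2']]; auto.
  { intros; eapply Rle_trans; [apply Cmod_snd|auto]. }
  { intro k. apply (proj1 (Cser_iff _ _) (Ha k)). }
  exists (S1, S2). split; apply Cser_iff; simpl; split; auto.
  - eapply Un_cv_ext. 2: exact H1'. intro n. apply sum_eq. intros. simpl. rewrite fst_Csum. reflexivity.
  - eapply Un_cv_ext. 2: exact H2'. intro n. apply sum_eq. intros. simpl. rewrite snd_Csum. reflexivity.
Qed.

Definition lsum (b : list nat) : nat := fold_right plus 0%nat b.

Lemma lsum_repeat0 r : lsum (repeat 0%nat r) = 0%nat.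
Proof. induction r; simpl; auto. Qed.

Lemma NoDup_map_cons (j : nat) (L : list (list nat)) : NoDup L -> NoDup (map (cons j) L).
Proof. intro H. apply NoDup_map_NoDup_ForallPairs; auto. intros x y _ _ E. injection E; auto. Qed.

Lemma NoDup_flat_map_cons (L : nat -> list (list nat)) a n :
  (forall j, NoDup (L j)) -> NoDup (flat_map (fun j => map (cons j) (L j)) (seq a n)).
Proof.
  revert a. induction n; intros a H; simpl. constructor.
  apply NoDup_app. apply NoDup_map_cons, H. apply IHn, H.
  intros x hx hx'. apply in_map_iff in hx as [y [<- _]].
  apply in_flat_map in hx' as [j [hj hj']]. apply in_seq in hj. apply in_map_iff in hj' as [y' [E _]].
  injection E; intros; lia.
Qed.

Lemma mi_spec r k a : In a (mi r k) <-> length a = r /\ lsum a = k.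
Proof.
  revert k a. induction r; intros k a.
  - simpl. destruct k; simpl; split.
    + intros [<-|[]]; auto.
    + intros [h1 h2]. destruct a; [left; auto| simpl in h1; lia].
    + intros [].
    + intros [h1 h2]. destruct a; simpl in *; lia.
  - cbn [mi]. rewrite in_flat_map. split.
    + intros [j [hj ha]]. apply in_seq in hj. apply in_map_iff in ha as [b [<- hb]].
      apply IHr in hb as [h1 h2]. simpl. split; lia.
    + intros [h1 h2]. destruct a as [|j b]; simpl in h1. lia.
      exists j. split. apply in_seq. simpl in h2. lia.
      apply in_map. apply IHr. simpl in h2. split; lia.
Qed.

Lemma mi_NoDup r k : NoDup (mi r k).
Proof.
  revert k. induction r; intro k. simpl. destruct k; repeat constructor; auto.
  cbn [mi]. apply NoDup_flat_map_cons. auto.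
Qed.

Definition AK r K := flat_map (mi r) (seq 0 (S K)).

Lemma AK_spec r K a : In a (AK r K) <-> length a = r /\ (lsum a <= K)%nat.
Proof.
  unfold AK. rewrite in_flat_map. split.
  - intros [k [hk ha]]. apply in_seq in hk. apply mi_spec in ha. lia.
  - intros [h1 h2]. exists (lsum a). split. apply in_seq. lia. apply mi_spec. auto.
Qed.

Lemma AK_S r K : AK r (S K) = AK r K ++ mi r (S K).
Proof. unfold AK. rewrite (seq_S (S K)). rewrite flat_map_app. simpl. rewrite app_nil_r. reflexivity. Qed.

Lemma AK_NoDup r K : NoDup (AK r K).
Proof.
  induction K. unfold AK; simpl. rewrite app_nil_r. apply mi_NoDup.
  rewrite AK_S. apply NoDup_app; auto. apply mi_NoDup.
  intros a h1 h2. apply AK_spec in h1. apply mi_spec in h2. lia.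
Qed.

Lemma mono_from_bound (i : nat) z (a : list nat) rho :
  0 <= rho -> (forall j, (j < length a)%nat -> Cmod (z (i + j)%nat) <= rho) ->
  Cmod (mono_from i z a) <= rho ^ lsum a.
Proof.
  revert i. induction a as [|x a IH]; intros i h0 H; simpl. rewrite Cmod_C1; lra.
  rewrite Cmod_mul, Cmod_pow, pow_add. apply Rmult_le_compat.
  apply pow_le, Cmod_ge0. apply Cmod_ge0. apply pow_incr. split. apply Cmod_ge0.
  replace i with (i + 0)%nat at 1 by lia. apply H. simpl; lia.
  apply IH; auto. intros j hj. replace (S i + j)%nat with (i + S j)%nat by lia. apply H. simpl; lia.
Qed.

Lemma mono_bound r rho z a :
  0 <= rho -> polydisc r rho z -> length a = r -> Cmod (mono z a) <= rho ^ lsum a.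
Proof. intros h0 hz ha. apply mono_from_bound; auto. intros j hj. apply hz. simpl. lia. Qed.

Lemma mono_from_zero i z r : mono_from i z (repeat 0%nat r) = C1.
Proof. revert i. induction r; intro i; simpl. reflexivity. rewrite IHr. ring. Qed.

Fixpoint ladd (b c : list nat) : list nat :=
  match b, c with x :: b', y :: c' => (x + y)%nat :: ladd b' c' | _, _ => [] end.

Lemma ladd_length b c : length b = length c -> length (ladd b c) = length b.
Proof. revert c; induction b; intros [|y c]; simpl; intros; auto; try lia. Qed.

Lemma ladd_lsum b c : length b = length c -> lsum (ladd b c) = (lsum b + lsum c)%nat.
Proof. revert c; induction b; intros [|y c]; simpl; intros; auto; try lia. rewrite IHb by lia. lia. Qed.

Lemma mono_from_ladd i z b c : length b = length c ->
  mono_from i z (ladd b c) = Cmul (mono_from i z b) (mono_from i z c).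
Proof.
  revert i c; induction b; intros i [|y c]; simpl; intros; try lia. ring.
  rewrite IHb by lia. rewrite Cpow_add. ring.
Qed.

Lemma mono_from_scale i t z a :
  mono_from i (fun j => Cmul (Cr t) (z j)) a = Cmul (Cr (t ^ lsum a)) (mono_from i z a).
Proof.
  revert i. induction a; intro i; simpl. apply Ceq; unfold Cr, C1, Cmul; simpl; ring.
  rewrite IHa, Cpow_Cr_mul, pow_add, <- Cr_mul. ring.
Qed.

Lemma mono_from_shift i z a : mono_from (S i) z a = mono_from i (fun j => z (S j)) a.
Proof. revert i; induction a; intro i; simpl; auto. rewrite IHa. reflexivity. Qed.

Lemma norm_term_eq r s rho c k :
  norm_term r s rho c k = Rlsum (map (fun a => vnorm s (c a) * rho ^ k) (mi r k)).
Proof.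
  unfold norm_term. fold (Rlsum (map (fun alpha => vnorm s (c alpha)) (mi r k))).
  rewrite Rmult_comm, <- Rlsum_map_mull. apply Rlsum_map_ext; intros; ring.
Qed.

Lemma norm_term_ge0 r s rho c k : 0 <= rho -> 0 <= norm_term r s rho c k.
Proof.
  intro h. rewrite norm_term_eq. apply Rlsum_ge0. intros.
  apply Rmult_le_pos. apply vnorm_ge0. apply pow_le; auto.
Qed.

Lemma sum_norm_term_AK r s rho c K :
  sum_f_R0 (norm_term r s rho c) K = Rlsum (map (fun a => vnorm s (c a) * rho ^ lsum a) (AK r K)).
Proof.
  assert (E : forall k, norm_term r s rho c k = Rlsum (map (fun a => vnorm s (c a) * rho ^ lsum a) (mi r k))).
  { intro k. rewrite norm_term_eq. apply Rlsum_map_ext. intros a ha. apply mi_spec in ha. rewrite (proj2 ha). ring. }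
  induction K.
  - unfold AK; simpl. rewrite app_nil_r. apply E.
  - rewrite tech5, IHK, AK_S, map_app, Rlsum_app, E. reflexivity.
Qed.

Lemma Csum_hom_part_AK r c z i K :
  Csum (fun k => hom_part r c k z i) K = Clsum (map (fun a => Cmul (mono z a) (c a i)) (AK r K)).
Proof.
  induction K.
  - unfold AK; simpl. rewrite app_nil_r. reflexivity.
  - simpl Csum. rewrite IHK, AK_S, map_app, Clsum_app. reflexivity.
Qed.

Lemma hom_part_bound r s rho c k w i : 0 <= rho -> polydisc r rho w -> (i < s)%nat ->
  Cmod (hom_part r c k w i) <= norm_term r s rho c k.
Proof.
  intros h0 hw hi. rewrite norm_term_eq. unfold hom_part. eapply Rle_trans. apply Cmod_Clsum.
  apply Rlsum_le. intros a ha. apply mi_spec in ha. rewrite Cmod_mul, Rmult_comm.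
  apply Rmult_le_compat; try apply Cmod_ge0. apply vnorm_comp; auto.
  destruct ha as [h1 h2]. rewrite <- h2. apply mono_bound with r; auto.
Qed.

Lemma hom_part_scale r c k w i t :
  hom_part r c k (fun j => Cmul (Cr t) (w j)) i = Cmul (Cr (t ^ k)) (hom_part r c k w i).
Proof.
  unfold hom_part. rewrite <- Clsum_map_mull. apply Clsum_map_ext. intros a ha.
  apply mi_spec in ha. unfold mono. rewrite mono_from_scale. rewrite (proj2 ha). ring.
Qed.

(** ** The identity theorem for power series

    A power series which vanishes on the closed polydisc of radius [ρ > 0] has
    vanishing coefficients.  Consequently the norm [‖f‖_ρ] does not depend on the
    chosen coefficient family. *)

Lemma pow_le1 t m : 0 <= t <= 1 -> t ^ m <= 1.
Proof. intro h. induction m; simpl. lra. nra. Qed.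

Lemma power_series_leading_bound (b M : nat -> R) Mt n t :
  (forall k, Rabs (b k) <= M k) -> infinite_sum M Mt -> 0 < t <= 1 ->
  (forall j, (j < n)%nat -> b j = 0) -> infinite_sum (fun k => b k * t ^ k) 0 ->
  Rabs (b n) <= t * Mt.
Proof.
  intros HbM HM ht Hlow Ht.
  assert (HM0 : forall k, 0 <= M k) by (intro k; pose proof (HbM k); pose proof (Rabs_pos (b k)); lra).
  assert (Hrest : Rabs (0 - b n * t ^ n) <= t ^ (S n) * Mt).
  { apply lim_dist_bound with (fun N => sum_f_R0 (fun k => b k * t ^ k) N) n; auto.
    intros N hN.
    replace (sum_f_R0 (fun k => b k * t ^ k) N) with
      (sum_f_R0 (fun k => if (k =? n)%nat then 0 else b k * t ^ k) N
       + sum_f_R0 (fun k => if (k =? n)%nat then b n * t ^ n else 0) N).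
    2:{ rewrite <- plus_sum. apply sum_eq. intros i hi. destruct (Nat.eqb_spec i n). subst; ring. ring. }
    rewrite sum_delta by lia.
    replace (sum_f_R0 (fun k => if (k =? n)%nat then 0 else b k * t ^ k) N + b n * t ^ n - b n * t ^ n)
      with (sum_f_R0 (fun k => if (k =? n)%nat then 0 else b k * t ^ k) N) by ring.
    eapply Rle_trans. apply sum_f_R0_triangle.
    apply Rle_trans with (sum_f_R0 (fun k => t ^ S n * M k) N).
    - apply sum_Rle. intros k hk. destruct (Nat.eqb_spec k n).
      { rewrite Rabs_R0. apply Rmult_le_pos. apply pow_le; lra. auto. }
      destruct (Nat.lt_ge_cases k n).
      + rewrite Hlow by auto. rewrite Rmult_0_l, Rabs_R0. apply Rmult_le_pos. apply pow_le; lra. auto.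
      + rewrite Rabs_mult, (Rabs_right (t ^ k)) by (apply Rle_ge, pow_le; lra). rewrite Rmult_comm.
        apply Rmult_le_compat. apply pow_le; lra. apply Rabs_pos. 2: auto.
        replace k with (S n + (k - S n))%nat by lia. rewrite pow_add.
        pose proof (pow_le t (S n)). assert (t ^ (k - S n) <= 1) by (apply pow_le1; lra).
        assert (0 <= t ^ (k - S n)) by (apply pow_le; lra). nra.
    - replace (sum_f_R0 (fun k => t ^ S n * M k) N) with (t ^ S n * sum_f_R0 M N)
        by (rewrite scal_sum; apply sum_eq; intros; ring).
      apply Rmult_le_compat_l. apply pow_le; lra. apply partial_sum_le; auto. }
  rewrite Rminus_0_l, Rabs_Ropp, Rabs_mult, (Rabs_right (t ^ n)) in Hrest
    by (apply Rle_ge, pow_le; lra).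
  simpl in Hrest. assert (0 < t ^ n) by (apply pow_lt; lra). nra.
Qed.

Lemma power_series_identity (b M : nat -> R) Mt :
  (forall k, Rabs (b k) <= M k) -> infinite_sum M Mt ->
  (forall t, 0 < t <= 1 -> infinite_sum (fun k => b k * t ^ k) 0) -> forall k, b k = 0.
Proof.
  intros HbM HM Ht.
  assert (HMt : 0 <= Mt).
  { apply (series_ge0 M); auto. intro k; pose proof (HbM k); pose proof (Rabs_pos (b k)); lra. }
  intro n. induction n as [n IH] using (well_founded_induction lt_wf).
  destruct (Req_dec (b n) 0) as [h|h]; auto. exfalso.
  pose proof (Rabs_pos_lt _ h) as hb.
  set (t := Rmin 1 (Rabs (b n) / (2 * (Mt + 1)))).
  assert (ht : 0 < t <= 1).
  { unfold t. split. apply Rmin_glb_lt. lra. apply Rdiv_lt_0_compat; lra. apply Rmin_l. }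
  pose proof (power_series_leading_bound b M Mt n t HbM HM ht IH (Ht t ht)) as key.
  assert (t <= Rabs (b n) / (2 * (Mt + 1))) by apply Rmin_r.
  assert (t * Mt <= Rabs (b n) / (2 * (Mt + 1)) * Mt) by (apply Rmult_le_compat_r; lra).
  assert (Rabs (b n) / (2 * (Mt + 1)) * Mt < Rabs (b n)).
  { unfold Rdiv. rewrite Rmult_assoc. rewrite <- (Rmult_1_r (Rabs (b n))) at 2.
    apply Rmult_lt_compat_l. lra.
    apply Rmult_lt_reg_l with (2 * (Mt + 1)). lra. field_simplify; lra. }
  lra.
Qed.

Lemma polynomial_identity_part (part : C -> R) (q : nat -> C) k rho : 0 < rho ->
  (forall u x, part (Cmul (Cr u) x) = u * part x) ->
  (forall u, 0 <= u <= rho -> sum_f_R0 (fun j => part (Cmul (Cr (u ^ j)) (q j))) k = 0) ->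
  forall j, (j <= k)%nat -> part (q j) = 0.
Proof.
  intros hrho hsc H.
  set (b := fun j => if (j <=? k)%nat then part (q j) * rho ^ j else 0).
  assert (Hb : forall j, b j = 0).
  { apply (power_series_identity b (fun j => Rabs (b j)) (sum_f_R0 (fun j => Rabs (b j)) k)).
    - intro; lra.
    - apply series_finite. intros j hj. unfold b. destruct (Nat.leb_spec j k). lia. apply Rabs_R0.
    - intros t ht. replace 0 with (sum_f_R0 (fun j => b j * t ^ j) k).
      + apply series_finite. intros j hj. unfold b. destruct (Nat.leb_spec j k). lia. ring.
      + rewrite <- (H (rho * t)) by nra. apply sum_eq. intros j hj. unfold b.
        destruct (Nat.leb_spec j k); [|lia]. rewrite hsc, Rpow_mult_distr. ring. }
  intros j hj. specialize (Hb j). unfold b in Hb. destruct (Nat.leb_spec j k); [|lia].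
  assert (0 < rho ^ j) by (apply pow_lt; lra). nra.
Qed.

Lemma polynomial_identity (q : nat -> C) k rho : 0 < rho ->
  (forall u, 0 <= u <= rho -> Csum (fun j => Cmul (Cr (u ^ j)) (q j)) k = C0) ->
  forall j, (j <= k)%nat -> q j = C0.
Proof.
  intros hrho H j hj. apply Ceq.
  - apply (polynomial_identity_part fst q k rho hrho Cr_fst); auto.
    intros u hu. rewrite <- fst_Csum, H; auto.
  - apply (polynomial_identity_part snd q k rho hrho Cr_snd); auto.
    intros u hu. rewrite <- snd_Csum, H; auto.
Qed.

(** A homogeneous polynomial vanishing on the polydisc has zero coefficients
    (induction on the number of variables, expanding in the first one). *)
Lemma hom_part_identity rho : 0 < rho -> forall r k (c : coef) i,
  (forall w, polydisc r rho w -> hom_part r c k w i = C0) ->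
  forall a, In a (mi r k) -> c a i = C0.
Proof.
  intros hrho r. induction r; intros k c i H a ha.
  - simpl in ha. destruct k; [|destruct ha]. destruct ha as [<-|[]].
    specialize (H (fun _ => C0) ltac:(intros j hj; lia)). unfold hom_part in H. simpl in H.
    rewrite <- H. unfold Clsum; simpl. unfold mono; simpl. ring.
  - cbn [mi] in ha. apply in_flat_map in ha as [j [hj hb]]. apply in_seq in hj.
    apply in_map_iff in hb as [b [<- hb]].
    set (cj := fun j (b : list nat) => c (j :: b)).
    assert (HQ : forall w', polydisc r rho w' ->
              forall j, (j <= k)%nat -> hom_part r (cj j) (k - j) w' i = C0).
    { intros w' hw'. apply polynomial_identity with rho; auto. intros u hu.
      set (w := fun m => match m with O => Cr u | S m => w' m end).
      assert (hw : polydisc (S r) rho w).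
      { intros m hm. destruct m. unfold w. rewrite Cmod_Cr, Rabs_right; lra. apply hw'. lia. }
      rewrite <- (H w hw). rewrite Csum_seq. unfold hom_part. cbn [mi]. rewrite Clsum_flat_map.
      apply Clsum_map_ext. intros j' hj'. apply in_seq in hj'. rewrite map_map. unfold hom_part.
      rewrite <- Clsum_map_mull. apply Clsum_map_ext. intros b' hb'. unfold mono. simpl.
      rewrite mono_from_shift. unfold cj. rewrite Cpow_Cr.
      change (mono_from 0 (fun j0 => w (S j0)) b') with (mono_from 0 w' b'). ring. }
    apply (IHr (k - j)%nat (cj j) i); auto.
    intros w' hw'. apply HQ; auto. lia.
Qed.

(** A dominated power series vanishing on the polydisc has all its homogeneous
    parts vanishing there: restrict to the complex line through [w]. *)
Lemma hom_parts_vanish r s rho (c : coef) Nn w i : 0 < rho -> infinite_sum (norm_term r s rho c) Nn ->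
  (forall z, polydisc r rho z -> Cser (fun k => hom_part r c k z i) C0) ->
  polydisc r rho w -> (i < s)%nat -> forall k, hom_part r c k w i = C0.
Proof.
  intros hrho HN H hw hi.
  assert (Hpart : forall part : C -> R, (forall x, Rabs (part x) <= Cmod x) ->
     (forall u x, part (Cmul (Cr u) x) = u * part x) ->
     (forall t, 0 < t <= 1 ->
        infinite_sum (fun k => part (Cmul (Cr (t ^ k)) (hom_part r c k w i))) (part C0)) ->
     forall k, part (hom_part r c k w i) = 0).
  { intros part hb hsc hser. apply power_series_identity with (norm_term r s rho c) Nn; auto.
    - intro k'. eapply Rle_trans. apply hb. apply hom_part_bound; auto. lra.
    - intros t ht. specialize (hser t ht).
      assert (E : part C0 = 0).
      { pose proof (hsc 0 C0) as E. replace (Cmul (Cr 0) C0) with C0 in E by ring. lra. }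
      rewrite E in hser. eapply Un_cv_ext. 2: exact hser. intro n. apply sum_eq. intros. rewrite hsc. ring. }
  assert (Hz : forall t, 0 < t <= 1 -> Cser (fun k => Cmul (Cr (t ^ k)) (hom_part r c k w i)) C0).
  { intros t ht. assert (hz : polydisc r rho (fun j => Cmul (Cr t) (w j))).
    { intros j hj. rewrite Cmod_mul, Cmod_Cr, Rabs_right by lra. specialize (hw j hj).
      pose proof (Cmod_ge0 (w j)). nra. }
    eapply Ccv_ext. 2: exact (H _ hz). intro n. apply Csum_ext. intros. apply hom_part_scale. }
  intro k. apply Ceq.
  - apply (Hpart fst Cmod_fst Cr_fst). intros t ht. apply (proj1 (Cser_iff _ _) (Hz t ht)).
  - apply (Hpart snd Cmod_snd Cr_snd). intros t ht. apply (proj1 (Cser_iff _ _) (Hz t ht)).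
Qed.

Lemma power_series_coef_vanish r s rho (c : coef) Nn : 0 < rho -> infinite_sum (norm_term r s rho c) Nn ->
  (forall z, polydisc r rho z -> forall i, (i < s)%nat -> Cser (fun k => hom_part r c k z i) C0) ->
  forall k a i, In a (mi r k) -> (i < s)%nat -> c a i = C0.
Proof.
  intros hrho HN H k a i ha hi. apply (hom_part_identity rho hrho r k c i); auto.
  intros w hw. apply (hom_parts_vanish r s rho c Nn w i); auto.
Qed.

Lemma Anorm_is_unique r s rho f N1 N2 :
  0 < rho -> Anorm_is r s rho f N1 -> Anorm_is r s rho f N2 -> N1 = N2.
Proof.
  intros hrho [e1 [R1 S1]] [e2 [R2 S2]].
  set (c := fun a i => Csub (e1 a i) (e2 a i)).
  assert (Hc : forall k a i, In a (mi r k) -> (i < s)%nat -> c a i = C0).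
  { destruct (series_comparison (norm_term r s rho c)
                (fun k => norm_term r s rho e1 k + norm_term r s rho e2 k) (N1 + N2)) as [Nc [HNc _]].
    - intro k. split. apply norm_term_ge0; lra.
      rewrite !norm_term_eq, <- Rlsum_map_add. apply Rlsum_le. intros a ha.
      rewrite <- Rmult_plus_distr_r. apply Rmult_le_compat_r. apply pow_le; lra.
      unfold c, Csub. eapply Rle_trans. apply vnorm_add.
      rewrite (vnorm_ext s (fun i => Copp (e2 a i)) (fun i => Cmul (Cr (-1)) (e2 a i))).
      + rewrite vnorm_scal, Cmod_Cr. replace (Rabs (-1)) with 1 by (rewrite Rabs_left; lra). lra.
      + intros. apply Ceq; unfold Copp, Cmul, Cr; simpl; ring.
    - apply series_add; auto.
    - apply (power_series_coef_vanish r s rho c Nc); auto. intros z hz i hi.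
      replace C0 with (Csub (f z i) (f z i)) by ring.
      eapply Ccv_ext. 2: apply (Ccv_sub _ _ _ _ (R1 z hz i hi) (R2 z hz i hi)).
      intro n. cbv beta. rewrite <- Csum_sub. apply Csum_ext. intros k _.
      unfold hom_part, c. rewrite <- Clsum_map_sub. apply Clsum_map_ext. intros; ring. }
  assert (E : forall k, norm_term r s rho e1 k = norm_term r s rho e2 k).
  { intro k. rewrite !norm_term_eq. apply Rlsum_map_ext. intros a ha. f_equal. apply vnorm_ext.
    intros i hi. specialize (Hc k a i ha hi). unfold c in Hc.
    replace (e1 a i) with (Cadd (Csub (e1 a i) (e2 a i)) (e2 a i)) by ring. rewrite Hc. ring. }
  apply series_unique with (norm_term r s rho e1); auto.
  eapply Un_cv_ext. 2: exact S2. intro n. apply sum_eq. intros; auto.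
Qed.

Lemma Anorm_eq r s rho f N : 0 < rho -> Anorm_is r s rho f N -> Anorm r s rho f = N.
Proof.
  intros h H. unfold Anorm. apply (Anorm_is_unique r s rho f); auto. apply epsilon_spec. exists N; auto.
Qed.

(** ** Expansions

    A _term_ [(α, v)] stands for the map [z ↦ z^α v], of weight [‖v‖ ρ^|α|].  Unlike power series, expansions may repeat monomials, which
    makes them closed under products and under series of maps. *)

Definition term : Type := (list nat * vec)%type.

Definition terms_val (z : vec) (i : nat) (L : list term) : C :=
  Clsum (map (fun p => Cmul (mono z (fst p)) (snd p i)) L).

Definition terms_weight (s : nat) (rho : R) (L : list term) : R :=
  Rlsum (map (fun p => vnorm s (snd p) * rho ^ lsum (fst p)) L).

Definition expansion (r s : nat) (rho : R) (f : fn) (T : nat -> list term) (W : R) : Prop :=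
  (forall n p, In p (T n) -> length (fst p) = r) /\
  infinite_sum (fun n => terms_weight s rho (T n)) W /\
  (forall z, polydisc r rho z -> forall i, (i < s)%nat -> Cser (fun n => terms_val z i (T n)) (f z i)).

Definition expandable (r s : nat) (rho : R) (f : fn) (W : R) : Prop :=
  exists T W', expansion r s rho f T W' /\ W' <= W.

Lemma terms_weight_ge0 s rho L : 0 <= rho -> 0 <= terms_weight s rho L.
Proof. intro h. apply Rlsum_ge0. intros. apply Rmult_le_pos. apply vnorm_ge0. apply pow_le; auto. Qed.

Lemma terms_val_bound r s rho z i L : 0 <= rho -> polydisc r rho z -> (i < s)%nat ->
  (forall p, In p L -> length (fst p) = r) -> Cmod (terms_val z i L) <= terms_weight s rho L.
Proof.
  intros h0 hz hi hL. unfold terms_val, terms_weight. eapply Rle_trans. apply Cmod_Clsum. apply Rlsum_le.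
  intros p hp. rewrite Cmod_mul. rewrite Rmult_comm. apply Rmult_le_compat. apply Cmod_ge0. apply Cmod_ge0.
  apply vnorm_comp; auto. apply mono_bound with r; auto.
Qed.

Lemma terms_val_app z i L1 L2 : terms_val z i (L1 ++ L2) = Cadd (terms_val z i L1) (terms_val z i L2).
Proof. unfold terms_val. rewrite map_app, Clsum_app. reflexivity. Qed.

Lemma terms_weight_app s rho L1 L2 : terms_weight s rho (L1 ++ L2) = terms_weight s rho L1 + terms_weight s rho L2.
Proof. unfold terms_weight. rewrite map_app, Rlsum_app. reflexivity. Qed.

Lemma terms_val_flat_map {A} z i (g : A -> list term) L :
  terms_val z i (flat_map g L) = Clsum (map (fun x => terms_val z i (g x)) L).
Proof. unfold terms_val. rewrite Clsum_flat_map. reflexivity. Qed.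

Lemma terms_weight_flat_map {A} s rho (g : A -> list term) L :
  terms_weight s rho (flat_map g L) = Rlsum (map (fun x => terms_weight s rho (g x)) L).
Proof. unfold terms_weight. rewrite Rlsum_flat_map. reflexivity. Qed.

Lemma expansion_weight_ge0 r s rho f T W : 0 <= rho -> expansion r s rho f T W -> 0 <= W.
Proof. intros h [_ [HS _]]. apply (series_ge0 (fun n => terms_weight s rho (T n))); auto. intro; apply terms_weight_ge0; auto. Qed.

Lemma expandable_mono r s rho f W W' : expandable r s rho f W -> W <= W' -> expandable r s rho f W'.
Proof. intros [T [V [h1 h2]]] h. exists T, V. split; auto. lra. Qed.

Lemma expandable_ext r s rho f g W :
  (forall z, polydisc r rho z -> forall i, (i < s)%nat -> f z i = g z i) ->
  expandable r s rho f W -> expandable r s rho g W.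
Proof.
  intros H [T [V [[h1 [h2 h3]] h4]]]. exists T, V. split; auto. split; auto. split; auto.
  intros z hz i hi. rewrite <- H by auto. auto.
Qed.

Lemma expandable_value_bound r s rho f W z i : 0 <= rho -> expandable r s rho f W ->
  polydisc r rho z -> (i < s)%nat -> Cmod (f z i) <= W.
Proof.
  intros h [T [V [[HL [HW HV]] HVW]]] hz hi. cut (Cmod (f z i) <= V). lra.
  apply Ccv_bound with (fun n => Csum (fun k => terms_val z i (T k)) n). apply HV; auto.
  intro n. eapply Rle_trans. apply Cmod_Csum.
  apply Rle_trans with (sum_f_R0 (fun k => terms_weight s rho (T k)) n).
  - apply sum_Rle. intros k _. apply terms_val_bound with r; auto. intros; eapply HL; eauto.
  - apply partial_sum_le; auto. intro; apply terms_weight_ge0; auto.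
Qed.

Definition ldec := list_eq_dec Nat.eq_dec.

Definition coef_of (L : list term) (a : list nat) : vec :=
  fun i => Clsum (map (fun p => if ldec (fst p) a then snd p i else C0) L).

Definition weight_of (s : nat) (L : list term) (a : list nat) : R :=
  Rlsum (map (fun p => if ldec (fst p) a then vnorm s (snd p) else 0) L).

Lemma count_R (x : list nat) (A : list (list nat)) c : NoDup A ->
  Rlsum (map (fun a => if ldec x a then c else 0) A) = if in_dec ldec x A then c else 0.
Proof.
  induction A; intros H. reflexivity. inversion H; subst. unfold Rlsum in *; cbn [map fold_right].
  rewrite IHA by auto.
  destruct (ldec x a); destruct (in_dec ldec x (a :: A)); destruct (in_dec ldec x A); subst;
    try tauto; try ring; simpl in *; try tauto.
  destruct i; [congruence| tauto].
Qed.

Lemma count_C (x : list nat) (A : list (list nat)) c : NoDup A ->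
  Clsum (map (fun a => if ldec x a then c else C0) A) = if in_dec ldec x A then c else C0.
Proof.
  induction A; intros H. reflexivity. inversion H; subst. cbn [map]. rewrite Clsum_cons.
  rewrite IHA by auto.
  destruct (ldec x a); destruct (in_dec ldec x (a :: A)); destruct (in_dec ldec x A); subst;
    try tauto; try ring; simpl in *; try tauto.
  destruct i; [congruence| tauto].
Qed.

Lemma regroup_weight s rho L A : NoDup A ->
  Rlsum (map (fun a => weight_of s L a * rho ^ lsum a) A) =
  Rlsum (map (fun p => if in_dec ldec (fst p) A then vnorm s (snd p) * rho ^ lsum (fst p) else 0) L).
Proof.
  intros hA. unfold weight_of.
  rewrite (Rlsum_map_ext _ (fun a => Rlsum (map (fun p => if ldec (fst p) a
             then vnorm s (snd p) * rho ^ lsum (fst p) else 0) L))).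
  - rewrite Rlsum_swap. apply Rlsum_map_ext. intros p hp. apply count_R; auto.
  - intros a ha. rewrite Rmult_comm, <- Rlsum_map_mull. apply Rlsum_map_ext. intros p hp.
    destruct (ldec (fst p) a). subst. ring. ring.
Qed.

Lemma regroup_value L A z i : NoDup A ->
  Clsum (map (fun a => Cmul (mono z a) (coef_of L a i)) A) =
  Clsum (map (fun p => if in_dec ldec (fst p) A then Cmul (mono z (fst p)) (snd p i) else C0) L).
Proof.
  intros hA. unfold coef_of.
  rewrite (Clsum_map_ext _ (fun a => Clsum (map (fun p => if ldec (fst p) a
             then Cmul (mono z (fst p)) (snd p i) else C0) L))).
  - rewrite Clsum_swap. apply Clsum_map_ext. intros p hp. apply count_C; auto.
  - intros a ha. rewrite <- Clsum_map_mull. apply Clsum_map_ext. intros p hp.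
    destruct (ldec (fst p) a). subst. reflexivity. ring.
Qed.

Lemma coef_of_bound s L a i : (i < s)%nat -> Cmod (coef_of L a i) <= weight_of s L a.
Proof.
  intros hi. unfold coef_of, weight_of. eapply Rle_trans. apply Cmod_Clsum. apply Rlsum_le.
  intros p hp. destruct (ldec _ _). apply vnorm_comp; auto. rewrite Cmod_C0; lra.
Qed.

Lemma weight_of_ge0 s L a : 0 <= weight_of s L a.
Proof. unfold weight_of. apply Rlsum_ge0. intros p hp. destruct (ldec (fst p) a). apply vnorm_ge0. lra. Qed.

Lemma weight_of_le s rho L a : 0 <= rho -> weight_of s L a * rho ^ lsum a <= terms_weight s rho L.
Proof.
  intro hr. unfold weight_of. rewrite Rmult_comm, <- Rlsum_map_mull. unfold terms_weight.
  apply Rlsum_le. intros p hp. destruct (ldec (fst p) a).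
  - subst. lra.
  - rewrite Rmult_0_r. apply Rmult_le_pos. apply vnorm_ge0. apply pow_le; auto.
Qed.

Lemma list_max_degree (L : list term) : exists M, forall p, In p L -> (lsum (fst p) <= M)%nat.
Proof.
  induction L. exists 0%nat; intros p []. destruct IHL as [M HM]. exists (max M (lsum (fst a))).
  intros p [<-|hp]. lia. specialize (HM p hp). lia.
Qed.

Definition Clim (u : nat -> C) : C := epsilon (inhabits C0) (fun L => Ccv u L).
Lemma Clim_spec u L : Ccv u L -> Ccv u (Clim u).
Proof. intro H. unfold Clim. apply epsilon_spec. exists L; auto. Qed.

Definition Rlim (u : nat -> R) : R := epsilon (inhabits 0) (fun L => Un_cv u L).
Lemma Rlim_spec u L : Un_cv u L -> Un_cv u (Rlim u).
Proof. intro H. unfold Rlim. apply epsilon_spec. exists L; auto. Qed.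

Lemma Ccv_of_cmod u L :
  (forall e, e > 0 -> exists N, forall n, (n >= N)%nat -> Cmod (Csub (u n) L) <= e) -> Ccv u L.
Proof.
  intros H. split; intros e he; destruct (H (e/2) ltac:(lra)) as [N HN]; exists N; intros n hn;
    specialize (HN n hn); unfold Rdist.
  - pose proof (Cmod_fst (Csub (u n) L)).
    replace (fst (u n) - fst L) with (fst (Csub (u n) L)) by (unfold Csub, Cadd, Copp; simpl; ring). lra.
  - pose proof (Cmod_snd (Csub (u n) L)).
    replace (snd (u n) - snd L) with (snd (Csub (u n) L)) by (unfold Csub, Cadd, Copp; simpl; ring). lra.
Qed.

Section Regroup.

Variables (r s : nat) (rho : R) (f : fn) (T : nat -> list term) (W : R).
Hypothesis hrho : 0 < rho.
Hypothesis HT : expansion r s rho f T W.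

Definition collected_coef (a : list nat) : vec :=
  fun i => Clim (fun N => Csum (fun n => coef_of (T n) a i) N).
Definition collected_weight (a : list nat) : R :=
  Rlim (fun N => sum_f_R0 (fun n => weight_of s (T n) a) N).

Lemma collected_weight_series a : infinite_sum (fun n => weight_of s (T n) a) (collected_weight a).
Proof.
  destruct HT as [_ [HW _]].
  assert (hp : 0 < rho ^ lsum a) by (apply pow_lt; lra).
  destruct (series_comparison (fun n => weight_of s (T n) a)
              (fun n => / rho ^ lsum a * terms_weight s rho (T n)) (/ rho ^ lsum a * W)) as [X [HX _]].
  - intro n. split. apply weight_of_ge0. pose proof (weight_of_le s rho (T n) a ltac:(lra)).
    apply Rmult_le_reg_l with (rho ^ lsum a); auto.
    rewrite <- Rmult_assoc, Rinv_r, Rmult_1_l by lra. lra.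
  - apply series_scal_l; auto.
  - unfold collected_weight. eapply Rlim_spec. exact HX.
Qed.

Lemma collected_coef_series a i : (i < s)%nat ->
  Cser (fun n => coef_of (T n) a i) (collected_coef a i) /\ Cmod (collected_coef a i) <= collected_weight a.
Proof.
  intros hi.
  destruct (Cser_dominated (fun n => coef_of (T n) a i) (fun n => weight_of s (T n) a) (collected_weight a))
    as [U [HU HUb]].
  - intro n. apply coef_of_bound; auto.
  - apply collected_weight_series.
  - assert (H : Cser (fun n => coef_of (T n) a i) (collected_coef a i))
      by (unfold collected_coef; eapply Clim_spec; exact HU).
    split; auto. rewrite (Cser_unique _ _ _ H HU). auto.
Qed.

Lemma collected_coef_vnorm a : vnorm s (collected_coef a) <= collected_weight a.
Proof.
  apply vnorm_lub.
  - apply (series_ge0 (fun n => weight_of s (T n) a)). intro; apply weight_of_ge0. apply collected_weight_series.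
  - intros; apply collected_coef_series; auto.
Qed.

Lemma collected_norm_bound : exists Nc, infinite_sum (norm_term r s rho collected_coef) Nc /\ Nc <= W.
Proof.
  destruct HT as [_ [HW _]].
  apply series_bounded_cv.
  { intro k. apply norm_term_ge0; lra. }
  intro K. rewrite sum_norm_term_AK.
  apply Rle_trans with (Rlsum (map (fun a => collected_weight a * rho ^ lsum a) (AK r K))).
  { apply Rlsum_le. intros a ha. apply Rmult_le_compat_r. apply pow_le; lra. apply collected_coef_vnorm. }
  apply series_le with (fun n => Rlsum (map (fun a => weight_of s (T n) a * rho ^ lsum a) (AK r K)))
                       (fun n => terms_weight s rho (T n)); auto.
  - intro n. rewrite regroup_weight by apply AK_NoDup. unfold terms_weight. apply Rlsum_le. intros p hp.
    destruct (in_dec ldec (fst p) (AK r K)). lra.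
    apply Rmult_le_pos. apply vnorm_ge0. apply pow_le; lra.
  - apply series_lsum. intros a ha. apply series_scal_r. apply collected_weight_series.
Qed.

Lemma collected_truncation_series z i K : (i < s)%nat ->
  Cser (fun n => Clsum (map (fun p => if in_dec ldec (fst p) (AK r K)
                                      then Cmul (mono z (fst p)) (snd p i) else C0) (T n)))
       (Clsum (map (fun a => Cmul (mono z a) (collected_coef a i)) (AK r K))).
Proof.
  intros hi.
  eapply Ccv_ext. 2: apply (Cser_lsum (AK r K) (fun a n => Cmul (mono z a) (coef_of (T n) a i))).
  - intro n. apply Csum_ext. intros k hk. apply regroup_value. apply AK_NoDup.
  - intros a ha. apply Cser_scal. apply collected_coef_series; auto.
Qed.

(** Truncating the regrouped series at degree [K] costs at most the weight of the
    terms beyond index [N0], provided all terms up to [N0] have degree [≤ K]. *)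
Lemma collected_truncation_error z i N0 K : polydisc r rho z -> (i < s)%nat ->
  (forall n, (n <= N0)%nat -> forall p, In p (T n) -> In (fst p) (AK r K)) ->
  Cmod (Csub (f z i) (Clsum (map (fun a => Cmul (mono z a) (collected_coef a i)) (AK r K))))
    <= W - sum_f_R0 (fun n => terms_weight s rho (T n)) N0.
Proof.
  intros hz hi HM. pose proof (collected_truncation_series z i K hi) as HE. destruct HT as [HL [HW HV]].
  set (w := fun p : term => vnorm s (snd p) * rho ^ lsum (fst p)).
  assert (Hw0 : forall p, 0 <= w p) by (intro p; apply Rmult_le_pos; [apply vnorm_ge0| apply pow_le; lra]).
  (* the weight of the terms outside [AK r K], which only occur beyond [N0] *)
  set (om := fun n => Rlsum (map (fun p => if in_dec ldec (fst p) (AK r K) then 0 else w p) (T n))).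
  assert (Hom : forall N, sum_f_R0 om N <= W - sum_f_R0 (fun n => terms_weight s rho (T n)) N0).
  { intro N.
    apply Rle_trans with (sum_f_R0 (fun n => if (n <=? N0)%nat then 0 else terms_weight s rho (T n)) (max N N0)).
    - apply Rle_trans with (sum_f_R0 om (max N N0)).
      + apply partial_sum_mono. 2: lia. intro n. unfold om. apply Rlsum_ge0. intros p hp.
        destruct (in_dec ldec (fst p) (AK r K)). lra. auto.
      + apply sum_Rle. intros n hn. unfold om. destruct (Nat.leb_spec n N0).
        * rewrite (Rlsum_map_ext _ (fun _ => 0)). rewrite Rlsum_const. lra.
          intros p hp. destruct (in_dec ldec (fst p) (AK r K)). auto. exfalso. apply n0. apply (HM n); auto.
        * unfold terms_weight. apply Rlsum_le. intros p hp. fold (w p).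
          destruct (in_dec ldec (fst p) (AK r K)); auto. lra.
    - apply partial_sum_le. intro n. destruct (n <=? N0)%nat. lra. apply terms_weight_ge0; lra.
      apply series_drop; auto. }
  eapply Ccv_bound. exact (Ccv_sub _ _ _ _ (HV z hz i hi) HE). intro N.
  cbv beta. rewrite <- Csum_sub.
  eapply Rle_trans. apply Cmod_Csum. eapply Rle_trans. 2: apply (Hom N). apply sum_Rle. intros n hn.
  unfold om, terms_val. rewrite <- Clsum_map_sub. eapply Rle_trans. apply Cmod_Clsum.
  apply Rlsum_le. intros p hp. unfold vec in *. repeat destruct (in_dec _ _ _); try contradiction.
  - match goal with |- Cmod ?x <= _ => replace x with C0 by ring end. rewrite Cmod_C0; lra.
  - match goal with |- Cmod ?x <= _ => replace x with (Cmul (mono z (fst p)) (snd p i)) by ring end.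
    unfold w. rewrite Cmod_mul, Rmult_comm. apply Rmult_le_compat; try apply Cmod_ge0.
    apply vnorm_comp; auto. apply mono_bound with r; auto. lra. apply HL with n; auto.
Qed.

Lemma collected_represents : represents r s rho f collected_coef.
Proof.
  destruct HT as [HL [HW HV]].
  intros z hz i hi. apply Ccv_of_cmod. intros e he.
  destruct (series_rest_cv0 _ _ HW e he) as [N0 HN0]. specialize (HN0 N0 (le_n _)).
  unfold Rdist in HN0. rewrite Rminus_0_r in HN0.
  destruct (eventually_finitely_many (fun n K => forall p, In p (T n) -> In (fst p) (AK r K)) N0) as [M HM].
  { intros n hn. destruct (list_max_degree (T n)) as [M HM]. exists M. intros K hK p hp.
    apply AK_spec. split. apply HL with n; auto. specialize (HM p hp). lia. }
  exists M. intros K hK. rewrite Csum_hom_part_AK, Cmod_sub_sym.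
  eapply Rle_trans. apply collected_truncation_error; auto. intros n hn p hp. apply (HM n hn K hK p hp).
  pose proof (Rle_abs (W - sum_f_R0 (fun n => terms_weight s rho (T n)) N0)). lra.
Qed.

End Regroup.

Lemma expansion_Anorm_bound r s rho f T W : 0 < rho -> expansion r s rho f T W ->
  exists Nc, Anorm_is r s rho f Nc /\ Nc <= W.
Proof.
  intros hrho HT. destruct (collected_norm_bound r s rho f T W hrho HT) as [Nc [H1 H2]].
  exists Nc. split; auto. exists (collected_coef T). split; auto.
  apply (collected_represents r s rho f T W); auto.
Qed.

Lemma Anorm_is_expandable r s rho f N : Anorm_is r s rho f N -> expandable r s rho f N.
Proof.
  intros [e [R1 S1]]. exists (fun k => map (fun a => (a, e a)) (mi r k)), N. split; [|lra]. split; [|split].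
  - intros n p hp. apply in_map_iff in hp as [a [<- ha]]. apply mi_spec in ha. apply ha.
  - eapply Un_cv_ext. 2: exact S1. intro n. apply sum_eq. intros k _. rewrite norm_term_eq.
    unfold terms_weight. rewrite map_map.
    apply Rlsum_map_ext. intros a ha. apply mi_spec in ha. simpl. rewrite (proj2 ha). reflexivity.
  - intros z hz i hi. eapply Ccv_ext. 2: exact (R1 z hz i hi). intro n. apply Csum_ext. intros k _.
    unfold terms_val, hom_part. rewrite map_map. reflexivity.
Qed.

Lemma expandable_inA r s rho f W : 0 < rho -> expandable r s rho f W ->
  inA r s rho f /\ Anorm r s rho f <= W.
Proof.
  intros h [T [V [HT HV]]]. destruct (expansion_Anorm_bound r s rho f T V h HT) as [Nc [H1 H2]].
  split. exists Nc; auto. rewrite (Anorm_eq r s rho f Nc) by auto. lra.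
Qed.

Lemma inA_expandable r s rho f : 0 < rho -> inA r s rho f -> expandable r s rho f (Anorm r s rho f).
Proof. intros h [N HN]. rewrite (Anorm_eq r s rho f N) by auto. apply Anorm_is_expandable; auto. Qed.

Lemma Anorm_ge0 r s rho f : 0 < rho -> inA r s rho f -> 0 <= Anorm r s rho f.
Proof.
  intros h [N HN]. rewrite (Anorm_eq r s rho f N) by auto. destruct HN as [e [_ S1]].
  apply (series_ge0 (norm_term r s rho e)); auto. intro; apply norm_term_ge0; lra.
Qed.

Lemma expandable_const r s rho (v : vec) : expandable r s rho (fun _ => v) (vnorm s v).
Proof.
  exists (fun n => match n with O => [(repeat 0%nat r, v)] | S _ => [] end), (vnorm s v). split; [|lra].
  split; [|split].
  - intros [|n] p hp; simpl in hp; [destruct hp as [<-|[]]; apply repeat_length | destruct hp].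
  - unfold infinite_sum. apply Un_cv_ext with (fun _ => vnorm s v). 2: apply Un_cv_const.
    intro n. induction n. unfold terms_weight, Rlsum; simpl. rewrite lsum_repeat0. ring.
    rewrite tech5, <- IHn. unfold terms_weight, Rlsum; simpl; ring.
  - intros z hz i hi. unfold Cser. apply Ccv_ext with (fun _ => v i). 2: apply Ccv_const.
    intro n. induction n. unfold terms_val; simpl. unfold mono. rewrite mono_from_zero. unfold Clsum; simpl; ring.
    simpl. rewrite <- IHn. unfold terms_val; simpl. unfold Clsum; simpl; ring.
Qed.

Lemma expandable_zero r s rho : expandable r s rho (fun _ _ => C0) 0.
Proof. rewrite <- (vnorm_zero s). apply (expandable_const r s rho (fun _ => C0)). Qed.

Lemma expandable_add r s rho f g W1 W2 :
  expandable r s rho f W1 -> expandable r s rho g W2 -> expandable r s rho (fadd f g) (W1 + W2).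
Proof.
  intros [T1 [V1 [[L1 [S1 H1]] h1]]] [T2 [V2 [[L2 [S2 H2]] h2]]].
  exists (fun n => T1 n ++ T2 n), (V1 + V2). split; [|lra]. split; [|split].
  - intros n p hp. apply in_app_or in hp as [hp|hp]; eauto.
  - eapply Un_cv_ext. 2: apply (series_add _ _ _ _ S1 S2).
    intro n. apply sum_eq. intros. rewrite terms_weight_app. reflexivity.
  - intros z hz i hi. unfold fadd. eapply Ccv_ext. 2: apply (Cser_add _ _ _ _ (H1 z hz i hi) (H2 z hz i hi)).
    intro n. apply Csum_ext. intros. rewrite terms_val_app. reflexivity.
Qed.

Lemma expandable_scal r s rho f W a : expandable r s rho f W -> expandable r s rho (fscal a f) (Cmod a * W).
Proof.
  intros [T [V [[L [S H]] h]]].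
  exists (fun n => map (fun p => (fst p, fun i => Cmul a (snd p i))) (T n)), (Cmod a * V).
  split. 2: apply Rmult_le_compat_l; auto; apply Cmod_ge0. split; [|split].
  - intros n p hp. apply in_map_iff in hp as [q [<- hq]]. simpl. eauto.
  - eapply Un_cv_ext. 2: apply (series_scal_l _ _ (Cmod a) S).
    intro n. apply sum_eq. intros. unfold terms_weight. rewrite map_map, <- Rlsum_map_mull.
    apply Rlsum_map_ext. intros p _. simpl. rewrite vnorm_scal. unfold vec in *; ring.
  - intros z hz i hi. unfold fscal. eapply Ccv_ext. 2: apply (Cser_scal a _ _ (H z hz i hi)).
    intro n. apply Csum_ext. intros. unfold terms_val. rewrite map_map, <- Clsum_map_mull.
    apply Clsum_map_ext. intros; simpl; ring.
Qed.

Lemma expandable_lsum {A} m d rho (L : list A) (F : A -> fn) (Wf : A -> R) :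
  (forall a, In a L -> expandable m d rho (F a) (Wf a)) ->
  expandable m d rho (fun z i => Clsum (map (fun a => F a z i) L)) (Rlsum (map Wf L)).
Proof.
  induction L; intros H; cbn [map].
  - apply expandable_zero.
  - apply (expandable_add _ _ _ (F a) (fun z i => Clsum (map (fun a => F a z i) L)) (Wf a) (Rlsum (map Wf L))).
    apply H; left; auto. apply IHL; intros; apply H; right; auto.
Qed.

Lemma expandable_coord m l rho g W j : 0 <= rho -> (j < l)%nat ->
  expandable m l rho g W -> expandable m 1 rho (fun z _ => g z j) W.
Proof.
  intros hr hj [T [V [[L [S H]] h]]].
  set (T' := fun n => map (fun p => (fst p, fun _ : nat => snd p j)) (T n)).
  destruct (series_comparison (fun n => terms_weight 1 rho (T' n)) (fun n => terms_weight l rho (T n)) V)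
    as [V' [HV' HV'V]]; auto.
  { intro n. split. apply terms_weight_ge0; auto. unfold T', terms_weight. rewrite map_map.
    apply Rlsum_le. intros p _. cbn [fst snd].
    rewrite vnorm_one. apply Rmult_le_compat_r. apply pow_le; auto. apply vnorm_comp; auto. }
  exists T', V'. split; [|lra]. split; [|split]; auto.
  - intros n p hp. unfold T' in hp. apply in_map_iff in hp as [q [<- hq]]. simpl. eauto.
  - intros z hz i hi. eapply Ccv_ext. 2: apply (H z hz j hj). intro n. apply Csum_ext. intros.
    unfold T', terms_val. rewrite map_map. reflexivity.
Qed.

(** The product of two lists of terms, the first one scalar-valued. *)
Definition terms_prod (L1 L2 : list term) : list term :=
  flat_map (fun p => map (fun q => (ladd (fst p) (fst q), fun i => Cmul (snd p 0%nat) (snd q i))) L2) L1.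

Section TermsProd.

Variables (r : nat) (L1 L2 : list term).
Hypothesis hL1 : forall p, In p L1 -> length (fst p) = r.
Hypothesis hL2 : forall p, In p L2 -> length (fst p) = r.

Lemma terms_prod_length p : In p (terms_prod L1 L2) -> length (fst p) = r.
Proof.
  intros hp. unfold terms_prod in hp. apply in_flat_map in hp as [a [ha hp]].
  apply in_map_iff in hp as [b [<- hb]].
  simpl. rewrite ladd_length; auto. rewrite hL1, hL2; auto.
Qed.

Lemma terms_weight_prod s rho :
  terms_weight s rho (terms_prod L1 L2) = terms_weight 1 rho L1 * terms_weight s rho L2.
Proof.
  unfold terms_prod. rewrite terms_weight_flat_map. unfold terms_weight at 2.
  rewrite Rmult_comm, <- Rlsum_map_mull.
  apply Rlsum_map_ext. intros a ha. unfold terms_weight. rewrite map_map, Rmult_comm, <- Rlsum_map_mull.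
  apply Rlsum_map_ext. intros b hb. cbn [fst snd].
  rewrite vnorm_scal, vnorm_one, ladd_lsum, pow_add. unfold vec in *; ring. rewrite hL1, hL2; auto.
Qed.

Lemma terms_val_prod z i :
  terms_val z i (terms_prod L1 L2) = Cmul (terms_val z 0 L1) (terms_val z i L2).
Proof.
  unfold terms_prod. rewrite terms_val_flat_map.
  transitivity (Clsum (map (fun a => Cmul (terms_val z i L2) (Cmul (mono z (fst a)) (snd a 0%nat))) L1)).
  - apply Clsum_map_ext; intros a ha.
    transitivity (Cmul (Cmul (mono z (fst a)) (snd a 0%nat)) (terms_val z i L2)); [|ring].
    unfold terms_val. rewrite map_map. rewrite <- Clsum_map_mull.
    apply Clsum_map_ext; intros b hb. cbn [fst snd]. unfold mono.
    rewrite mono_from_ladd by (rewrite hL1, hL2; auto). unfold vec in *; ring.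
  - rewrite Clsum_map_mull. unfold terms_val at 2. ring.
Qed.

End TermsProd.

(** Multiplying by a scalar-valued map multiplies the weights; the expansion of
    the product is the Cauchy product of the expansions. *)
Lemma expandable_mul m s rho h G W1 W2 : 0 <= rho ->
  expandable m 1 rho h W1 -> expandable m s rho G W2 ->
  expandable m s rho (fun z i => Cmul (h z 0%nat) (G z i)) (W1 * W2).
Proof.
  intros hr [T1 [V1 [HT1 h1]]] [T2 [V2 [HT2 h2]]].
  pose proof (expansion_weight_ge0 _ _ _ _ _ _ hr HT1). pose proof (expansion_weight_ge0 _ _ _ _ _ _ hr HT2).
  destruct HT1 as [L1 [S1 H1]], HT2 as [L2 [S2 H2]].
  set (w1 := fun k => terms_weight 1 rho (T1 k)). set (w2 := fun n => terms_weight s rho (T2 n)).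
  set (T := fun p => flat_map (fun n => terms_prod (T1 n) (T2 (p - n)%nat)) (seq 0 (S p))).
  exists T, (V1 * V2). split. 2: apply Rmult_le_compat; auto. split; [|split].
  - intros p q hq. unfold T in hq. apply in_flat_map in hq as [n [_ hq]].
    apply (terms_prod_length m (T1 n) (T2 (p - n)%nat)); eauto.
  - destruct (diagonal_series_real (fun k n => w1 k * w2 n) (fun k n => w1 k * w2 n)
               (fun k => w1 k * V2) (fun k => w1 k * V2) (V1 * V2)) as [St [HSt HD]].
    + intros. rewrite Rabs_right. lra. apply Rle_ge, Rmult_le_pos; apply terms_weight_ge0; auto.
    + intro k. apply series_scal_l; auto.
    + apply series_scal_r; auto.
    + intro k. apply series_scal_l; auto.
    + rewrite (series_unique _ _ _ HSt (series_scal_r _ _ V2 S1)) in HD.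
      eapply Un_cv_ext. 2: exact HD. intro n. apply sum_eq. intros p _.
      unfold T. rewrite terms_weight_flat_map, <- Rlsum_seq.
      apply Rlsum_map_ext. intros k _. symmetry. apply terms_weight_prod with m; eauto.
  - intros z hz i hi.
    set (v1 := fun k => terms_val z 0 (T1 k)). set (v2 := fun n => terms_val z i (T2 n)).
    destruct (diagonal_series (fun k n => Cmul (v1 k) (v2 n)) (fun k n => w1 k * w2 n)
               (fun k => w1 k * V2) (V1 * V2) (fun k => Cmul (v1 k) (G z i))) as [St [HSt HD]].
    + intros k n. rewrite Cmod_mul. apply Rmult_le_compat; try apply Cmod_ge0.
      apply terms_val_bound with m; eauto. apply terms_val_bound with m; eauto.
    + intro k. apply series_scal_l; auto.
    + apply series_scal_r; auto.
    + intro k. apply Cser_scal. exact (H2 z hz i hi).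
    + assert (HS2 : Cser (fun k => Cmul (v1 k) (G z i)) (Cmul (h z 0%nat) (G z i))).
      { replace (Cmul (h z 0%nat) (G z i)) with (Cmul (G z i) (h z 0%nat)) by ring.
        eapply Ccv_ext. 2: apply (Cser_scal (G z i) _ _ (H1 z hz 0%nat ltac:(lia))).
        intro n. cbv beta. apply Csum_ext. intros; unfold v1; ring. }
      rewrite (Cser_unique _ _ _ HSt HS2) in HD.
      eapply Ccv_ext. 2: exact HD. intro n. apply Csum_ext. intros p _.
      unfold T. rewrite terms_val_flat_map, Csum_seq. apply Clsum_map_ext. intros k _.
      symmetry. apply terms_val_prod with m; eauto.
Qed.

(** A series of expandable maps with summable weights is expandable; the
    expansions are merged along diagonals. *)
Lemma expandable_series r s rho f (H : nat -> fn) (Wk : nat -> R) Wt : 0 <= rho ->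
  (forall k, expandable r s rho (H k) (Wk k)) -> infinite_sum Wk Wt ->
  (forall z, polydisc r rho z -> forall i, (i < s)%nat -> Cser (fun k => H k z i) (f z i)) ->
  expandable r s rho f Wt.
Proof.
  intros hr HA HW HV.
  assert (X : forall k, {p : (nat -> list term) * R | expansion r s rho (H k) (fst p) (snd p) /\ snd p <= Wk k}).
  { intro k. apply constructive_indefinite_description. destruct (HA k) as [T [V h]]. exists (T, V). exact h. }
  set (Tk := fun k => fst (proj1_sig (X k))). set (Vk := fun k => snd (proj1_sig (X k))).
  assert (HT : forall k, expansion r s rho (H k) (Tk k) (Vk k) /\ Vk k <= Wk k) by (intro k; exact (proj2_sig (X k))).
  assert (HV0 : forall k, 0 <= Vk k) by (intro k; eapply expansion_weight_ge0; [exact hr| apply HT]).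
  destruct (series_comparison Vk Wk Wt) as [Vt [HVt HVtW]]; auto. { intro k; split; auto; apply HT. }
  set (T := fun p => flat_map (fun k => Tk k (p - k)%nat) (seq 0 (S p))).
  exists T, Vt. split; auto. split; [|split].
  - intros p q hq. unfold T in hq. apply in_flat_map in hq as [k [_ hq]]. destruct (HT k) as [[hl _] _]. eauto.
  - destruct (diagonal_series_real (fun k n => terms_weight s rho (Tk k n)) (fun k n => terms_weight s rho (Tk k n))
                Vk Vk Vt) as [St [HSt HD]]; auto.
    + intros. rewrite Rabs_right. lra. apply Rle_ge, terms_weight_ge0; auto.
    + intro k. apply HT.
    + intro k. apply HT.
    + rewrite (series_unique _ _ _ HSt HVt) in HD.
      eapply Un_cv_ext. 2: exact HD. intro n. apply sum_eq. intros p _.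
      unfold T. rewrite terms_weight_flat_map, Rlsum_seq. reflexivity.
  - intros z hz i hi.
    destruct (diagonal_series (fun k n => terms_val z i (Tk k n)) (fun k n => terms_weight s rho (Tk k n))
                Vk Vt (fun k => H k z i)) as [St [HSt HD]]; auto.
    + intros k n. destruct (HT k) as [[hl _] _]. apply terms_val_bound with r; eauto.
    + intro k. apply HT.
    + intro k. destruct (HT k) as [[_ [_ h]] _]. apply h; auto.
    + rewrite (Cser_unique _ _ _ HSt (HV z hz i hi)) in HD.
      eapply Ccv_ext. 2: exact HD. intro n. apply Csum_ext. intros p _.
      unfold T. rewrite terms_val_flat_map, Csum_seq. reflexivity.
Qed.

(** ** The Taylor coefficients of the composition operator

    For [|α| = k], the word [degree_word 0 α] lists each variable index [j]
    [α_j] times; it has length [k].  Replacing the [t]-th letter [j] of this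
    word by the [j]-th coordinate of the [t]-th argument [x_t] gives a
    [k]-linear version of [z^α].  Symmetrising over all orderings of the
    arguments yields the symmetric [k]-linear map [coef_op l η k]. *)

Fixpoint degree_word (i : nat) (a : list nat) : list nat :=
  match a with [] => [] | x :: t => repeat i x ++ degree_word (S i) t end.

Fixpoint word_prod (t : nat) (e : list nat) (x : nat -> fn) (z : vec) : C :=
  match e with [] => C1 | j :: e' => Cmul (x t z j) (word_prod (S t) e' x z) end.

Definition polar_part (l : nat) (eta : coef) (k : nat) (x : nat -> fn) : fn :=
  fun z i => Clsum (map (fun a => Cmul (word_prod 0 (degree_word 0 a) x z) (eta a i)) (mi l k)).

Fixpoint words (n k : nat) : list (list nat) :=
  match n with O => [ [] ] | S n => flat_map (fun j => map (cons j) (words n k)) (seq 0 k) end.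

Definition Perms (k : nat) : list (list nat) :=
  filter (fun t => if NoDup_dec Nat.eq_dec t then true else false) (words k k).

Definition coef_op (l : nat) (eta : coef) (k : nat) (x : nat -> fn) : fn :=
  fun z i => Cmul (Cr (/ INR (length (Perms k))))
    (Clsum (map (fun tau => polar_part l eta k (fun t => x (nth t tau 0%nat)) z i) (Perms k))).

Lemma degree_word_length i a : length (degree_word i a) = lsum a.
Proof. revert i; induction a; intro i; simpl; auto. rewrite length_app, repeat_length, IHa. reflexivity. Qed.

Lemma degree_word_lt i a j : In j (degree_word i a) -> (j < i + length a)%nat.
Proof.
  revert i; induction a; intros i h; simpl in *. destruct h.
  apply in_app_or in h as [h|h]. apply repeat_spec in h. lia. apply IHa in h. lia.
Qed.

Lemma words_spec n k t : In t (words n k) <-> length t = n /\ (forall x, In x t -> (x < k)%nat).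
Proof.
  revert t. induction n; intros t.
  - simpl. split. intros [<-|[]]. split; auto. intros x [].
    intros [h _]. destruct t; [auto|simpl in h; lia].
  - cbn [words]. rewrite in_flat_map. split.
    + intros [j [hj ht]]. apply in_seq in hj. apply in_map_iff in ht as [b [<- hb]].
      apply IHn in hb as [h1 h2]. simpl. split. lia. intros x [<-|hx]. lia. auto.
    + intros [h1 h2]. destruct t as [|j b]; simpl in h1. lia. exists j. split. apply in_seq.
      specialize (h2 j (or_introl eq_refl)). lia. apply in_map. apply IHn. split. lia.
      intros; apply h2; right; auto.
Qed.

Lemma words_NoDup n k : NoDup (words n k).
Proof. induction n. simpl. repeat constructor; auto. cbn [words]. apply NoDup_flat_map_cons. auto. Qed.

Lemma Perms_spec k t :
  In t (Perms k) <-> (length t = k /\ (forall x, In x t -> (x < k)%nat)) /\ NoDup t.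
Proof.
  unfold Perms. rewrite filter_In, words_spec.
  destruct (NoDup_dec Nat.eq_dec t); split; intros [h1 h2]; auto; try discriminate.
  all: try (split; auto); try contradiction.
Qed.

Lemma Perms_NoDup k : NoDup (Perms k).
Proof. apply NoDup_filter, words_NoDup. Qed.

Lemma Perms_length_pos k : (0 < length (Perms k))%nat.
Proof.
  assert (H : In (seq 0 k) (Perms k)).
  { apply Perms_spec. split. split. apply length_seq. intros x hx. apply in_seq in hx. lia. apply seq_NoDup. }
  destruct (Perms k). destruct H. simpl; lia.
Qed.

Lemma Perms_lt k tau t : In tau (Perms k) -> (t < k)%nat -> (nth t tau 0%nat < k)%nat.
Proof. intros htau ht. apply Perms_spec in htau as [[hl he] _]. apply he. apply nth_In. lia. Qed.

Fixpoint word_eval (e : list nat) (y : vec) : C :=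
  match e with [] => C1 | j :: e' => Cmul (y j) (word_eval e' y) end.

Lemma word_prod_const t e g z : word_prod t e (fun _ => g) z = word_eval e (g z).
Proof. revert t; induction e; intro t; simpl; auto. rewrite IHe. reflexivity. Qed.

Lemma word_eval_degree_word i a y : word_eval (degree_word i a) y = mono_from i y a.
Proof.
  assert (Happ : forall e1 e2, word_eval (e1 ++ e2) y = Cmul (word_eval e1 y) (word_eval e2 y))
    by (induction e1; intros; simpl; [ring| rewrite IHe1; ring]).
  assert (Hrep : forall j n, word_eval (repeat j n) y = Cpow (y j) n)
    by (induction n; simpl; auto; rewrite IHn; reflexivity).
  revert i; induction a; intro i; simpl; auto. rewrite Happ, Hrep, IHa. reflexivity.
Qed.

Lemma coef_op_diag l eta k g z i : coef_op l eta k (fun _ => g) z i = hom_part l eta k (g z) i.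
Proof.
  unfold coef_op.
  assert (E : forall tau, polar_part l eta k (fun t => (fun _ : nat => g) (nth t tau 0%nat)) z i
                          = hom_part l eta k (g z) i).
  { intro tau. unfold polar_part, hom_part. apply Clsum_map_ext. intros a ha.
    rewrite word_prod_const, word_eval_degree_word. reflexivity. }
  rewrite (Clsum_map_ext _ (fun _ => hom_part l eta k (g z) i)) by auto. rewrite Clsum_const.
  pose proof (Perms_length_pos k). assert (INR (length (Perms k)) <> 0) by (apply not_0_INR; lia).
  transitivity (Cmul (Cr (/ INR (length (Perms k)) * INR (length (Perms k)))) (hom_part l eta k (g z) i)).
  - rewrite <- Cr_mul. ring.
  - rewrite Rinv_l by auto. apply Ceq; unfold Cr, Cmul; simpl; ring.
Qed.

Lemma word_prod_ext t e x x' z :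
  (forall t' j, (t <= t')%nat -> (t' < t + length e)%nat -> In j e -> x t' z j = x' t' z j) ->
  word_prod t e x z = word_prod t e x' z.
Proof.
  revert t; induction e; intros t H; simpl; auto. rewrite H by (simpl; auto; lia). rewrite IHe; auto.
  intros t' j h1 h2 h3. apply H; simpl; auto; lia.
Qed.

Lemma polar_part_ext l eta k x x' z i :
  (forall t j, (t < k)%nat -> (j < l)%nat -> x t z j = x' t z j) ->
  polar_part l eta k x z i = polar_part l eta k x' z i.
Proof.
  intro H. unfold polar_part. apply Clsum_map_ext. intros a ha. apply mi_spec in ha. f_equal.
  apply word_prod_ext. intros t' j h1 h2 h3. apply H.
  rewrite degree_word_length in h2. lia. apply degree_word_lt in h3. lia.
Qed.

Lemma coef_op_welldef m l d rho eta k (g g' : nat -> fn) :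
  (forall t, (t < k)%nat -> Aeq m l rho (g t) (g' t)) ->
  Aeq m d rho (coef_op l eta k g) (coef_op l eta k g').
Proof.
  intros H z hz i hi. unfold coef_op. f_equal. apply Clsum_map_ext. intros tau htau.
  apply polar_part_ext. intros t j ht hj. apply H; auto. apply Perms_lt; auto.
Qed.

Lemma map_inj_lt (sg : nat -> nat) k l1 l2 :
  (forall a b, (a < k)%nat -> (b < k)%nat -> sg a = sg b -> a = b) ->
  (forall x, In x l1 -> (x < k)%nat) -> (forall x, In x l2 -> (x < k)%nat) ->
  map sg l1 = map sg l2 -> l1 = l2.
Proof.
  intros H. revert l2; induction l1; intros [|b l2] h1 h2 E; simpl in E; try discriminate; auto.
  injection E; intros E1 E2. f_equal. apply H; auto. apply h1; left; auto. apply h2; left; auto.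
  apply IHl1; auto. intros; apply h1; right; auto. intros; apply h2; right; auto.
Qed.

(** Symmetry: permuting the arguments by [σ] permutes the list [Perms k]. *)
Lemma coef_op_sym l eta k g sg z i :
  is_perm k sg -> coef_op l eta k (fun i => g (sg i)) z i = coef_op l eta k g z i.
Proof.
  intros [hs1 hs2]. unfold coef_op. f_equal.
  transitivity (Clsum (map (fun tau => polar_part l eta k (fun t => g (nth t tau 0%nat)) z i)
                          (map (map sg) (Perms k)))).
  - rewrite map_map. apply Clsum_map_ext. intros tau htau. apply polar_part_ext. intros t j ht hj.
    apply Perms_spec in htau as [[hl _] _]. rewrite <- (map_nth sg tau 0%nat t).
    rewrite (@nth_indep nat (map sg tau) t (sg 0%nat) 0%nat). reflexivity.
    rewrite length_map; lia.
  - apply Clsum_perm. apply Permutation_map. apply NoDup_Permutation_bis.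
    + apply NoDup_map_NoDup_ForallPairs. 2: apply Perms_NoDup. intros t1 t2 h1 h2 E.
      apply Perms_spec in h1 as [[_ h1] _]. apply Perms_spec in h2 as [[_ h2] _]. eapply map_inj_lt; eauto.
    + rewrite length_map; lia.
    + intros t ht. apply in_map_iff in ht as [tau [<- htau]]. apply Perms_spec in htau as [[hl he] hn].
      apply Perms_spec. split. split. rewrite length_map; auto.
      intros x hx. apply in_map_iff in hx as [y [<- hy]]. auto.
      apply NoDup_map_NoDup_ForallPairs; auto. intros a b ha hb E. apply hs2; auto.
Qed.

Lemma word_prod_lin t e (x1 x2 x3 : nat -> fn) z a t0 : (t <= t0 < t + length e)%nat ->
  (forall t' j, (t <= t')%nat -> (t' < t + length e)%nat -> t' <> t0 ->
     x1 t' z j = x2 t' z j /\ x3 t' z j = x2 t' z j) ->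
  (forall j, x1 t0 z j = Cadd (Cmul a (x2 t0 z j)) (x3 t0 z j)) ->
  word_prod t e x1 z = Cadd (Cmul a (word_prod t e x2 z)) (word_prod t e x3 z).
Proof.
  revert t; induction e as [|j e IH]; intros t ht H H0; simpl in *. lia.
  destruct (Nat.eq_dec t t0).
  - subst t0. rewrite H0.
    assert (E1 : word_prod (S t) e x1 z = word_prod (S t) e x2 z) by (apply word_prod_ext; intros; apply H; lia).
    assert (E3 : word_prod (S t) e x3 z = word_prod (S t) e x2 z) by (apply word_prod_ext; intros; apply H; lia).
    rewrite E1, E3. ring.
  - destruct (H t j ltac:(lia) ltac:(lia) n) as [E1 E3]. rewrite E1, E3.
    rewrite (IH (S t)); auto. ring. lia. intros; apply H; lia.
Qed.

(** Linearity in the [j0]-th argument: in each ordering [τ] the index [j0]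
    occurs at exactly one position. *)
Lemma coef_op_lin l eta k (g : nat -> fn) j0 (x y : fn) (a : C) z i : (j0 < k)%nat ->
  coef_op l eta k (upd g j0 (fadd (fscal a x) y)) z i =
  Cadd (Cmul a (coef_op l eta k (upd g j0 x) z i)) (coef_op l eta k (upd g j0 y) z i).
Proof.
  intro hj. unfold coef_op.
  rewrite (Clsum_map_ext (fun tau => polar_part l eta k (fun t => upd g j0 (fadd (fscal a x) y) (nth t tau 0%nat)) z i)
     (fun tau => Cadd (Cmul a (polar_part l eta k (fun t => upd g j0 x (nth t tau 0%nat)) z i))
                      (polar_part l eta k (fun t => upd g j0 y (nth t tau 0%nat)) z i))).
  { rewrite Clsum_map_add, Clsum_map_mull. ring. }
  intros tau htau. apply Perms_spec in htau as [[hl he] hn].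
  assert (hin : In j0 tau).
  { apply (@NoDup_length_incl nat tau (seq 0 k) hn). rewrite length_seq; lia.
    intros u hu. apply in_seq. split. lia. simpl. auto. apply in_seq. lia. }
  destruct (In_nth tau j0 0%nat hin) as [t0 [ht0 Et0]].
  unfold polar_part. rewrite <- Clsum_map_mull, <- Clsum_map_add. apply Clsum_map_ext.
  intros al hal. apply mi_spec in hal.
  rewrite (word_prod_lin 0 (degree_word 0 al) (fun t => upd g j0 (fadd (fscal a x) y) (nth t tau 0%nat))
     (fun t => upd g j0 x (nth t tau 0%nat)) (fun t => upd g j0 y (nth t tau 0%nat)) z a t0). ring.
  - rewrite degree_word_length. lia.
  - intros t' jj h1 h2 h3. rewrite degree_word_length in h2. unfold upd.
    destruct (Nat.eqb_spec (nth t' tau 0%nat) j0). 2: auto.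
    exfalso. apply h3. apply (proj1 (NoDup_nth tau 0%nat) hn); lia.
  - intro jj. unfold upd. rewrite Et0, Nat.eqb_refl. unfold fadd, fscal. reflexivity.
Qed.

(** Each argument contributes a factor [Wg] through one of its coordinates, so
    [coef_op l η k] applied to arguments of weight [≤ Wg] has weight
    [≤ (Σ_{|α|=k} ‖η_α‖) Wg^k]. *)

Lemma expandable_word_prod m l d rho (x : nat -> fn) Wg (v : vec) : 0 <= rho -> forall e t,
  (forall j, In j e -> (j < l)%nat) ->
  (forall t', (t <= t')%nat -> (t' < t + length e)%nat -> expandable m l rho (x t') Wg) ->
  expandable m d rho (fun z i => Cmul (word_prod t e x z) (v i)) (Wg ^ length e * vnorm d v).
Proof.
  intros hr e. induction e as [|j e IH]; intros t he hx; simpl.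
  - eapply expandable_ext. 2: apply expandable_mono with (vnorm d v). 2: apply expandable_const.
    intros; simpl; ring. lra.
  - replace (Wg * Wg ^ length e * vnorm d v) with (Wg * (Wg ^ length e * vnorm d v)) by ring.
    eapply expandable_ext.
    2: apply (expandable_mul m d rho (fun z _ => x t z j) (fun z i => Cmul (word_prod (S t) e x z) (v i))); auto.
    + intros; simpl; ring.
    + apply expandable_coord with l; auto. apply he; left; auto. apply hx; simpl; lia.
    + apply IH. intros; apply he; right; auto. intros; apply hx; simpl; lia.
Qed.

Lemma expandable_polar_part m l d rho eta k (x : nat -> fn) Wg : 0 <= rho ->
  (forall t, (t < k)%nat -> expandable m l rho (x t) Wg) ->
  expandable m d rho (polar_part l eta k x) (Rlsum (map (fun a => vnorm d (eta a)) (mi l k)) * Wg ^ k).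
Proof.
  intros hr hx. unfold polar_part. rewrite Rmult_comm, <- Rlsum_map_mull.
  apply (expandable_lsum m d rho (mi l k) (fun a z i => Cmul (word_prod 0 (degree_word 0 a) x z) (eta a i))
           (fun a => Wg ^ k * vnorm d (eta a))).
  intros a ha. apply mi_spec in ha as [h1 h2].
  replace k with (length (degree_word 0 a)) at 1 by (rewrite degree_word_length; auto).
  apply expandable_word_prod with l; auto.
  - intros j hj. apply degree_word_lt in hj. lia.
  - intros t' _ ht'. apply hx. rewrite degree_word_length in ht'. lia.
Qed.

Lemma expandable_coef_op m l d rho eta k (g : nat -> fn) Wg : 0 <= rho ->
  (forall t, (t < k)%nat -> expandable m l rho (g t) Wg) ->
  expandable m d rho (coef_op l eta k g) (Rlsum (map (fun a => vnorm d (eta a)) (mi l k)) * Wg ^ k).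
Proof.
  intros hr hg. set (c := Rlsum (map (fun a => vnorm d (eta a)) (mi l k)) * Wg ^ k).
  pose proof (Perms_length_pos k). assert (hL : 0 < INR (length (Perms k))) by (apply lt_0_INR; lia).
  eapply expandable_ext. 2: eapply expandable_mono.
  2: apply (expandable_scal m d rho
              (fun z i => Clsum (map (fun tau => polar_part l eta k (fun t => g (nth t tau 0%nat)) z i) (Perms k)))
              (Rlsum (map (fun _ => c) (Perms k))) (Cr (/ INR (length (Perms k))))).
  - intros; unfold fscal, coef_op; reflexivity.
  - apply expandable_lsum. intros tau htau. apply expandable_polar_part; auto.
    intros t ht. apply hg. apply Perms_lt; auto.
  - rewrite Rlsum_const, Cmod_Cr. rewrite Rabs_right by (apply Rle_ge; left; apply Rinv_0_lt_compat; auto).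
    rewrite <- Rmult_assoc, Rinv_l by lra. lra.
Qed.

Lemma term_le_partial_sum (a : nat -> R) n N :
  (forall k, 0 <= a k) -> (n <= N)%nat -> a n <= sum_f_R0 a N.
Proof.
  intros H h. apply Rle_trans with (sum_f_R0 a n).
  - destruct n. simpl; lra. rewrite tech5. pose proof (cond_pos_sum a n H). lra.
  - apply partial_sum_mono; auto.
Qed.

Section Composition.

Variables (l d m : nat) (rho delta : R) (eta : coef).
Hypothesis hdel : 0 < delta.

(** [coef_mass k = Σ_{|α|=k} ‖η_α‖], so that [‖f‖_ρ = Σ_k coef_mass k ρ^k]. *)
Definition coef_mass (k : nat) : R := Rlsum (map (fun a => vnorm d (eta a)) (mi l k)).

Lemma coef_mass_ge0 k : 0 <= coef_mass k.
Proof. apply Rlsum_ge0. intros; apply vnorm_ge0. Qed.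

Lemma coef_op_bound k (g : nat -> fn) W :
  (forall t, (t < k)%nat -> inA m l delta (g t) /\ Anorm m l delta (g t) <= W) ->
  inA m d delta (coef_op l eta k g) /\ Anorm m d delta (coef_op l eta k g) <= coef_mass k * W ^ k.
Proof.
  intros hg. apply expandable_inA; auto. apply expandable_coef_op. lra.
  intros t ht. destruct (hg t ht) as [h1 h2]. eapply expandable_mono. apply inA_expandable; auto. exact h2.
Qed.

Lemma coef_op_sym_multilinear k : sym_multilinear m l d delta k (coef_op l eta k).
Proof.
  split; [|split; [|split]].
  - intros g hg.
    set (Wg := sum_f_R0 (fun t => Rabs (Anorm m l delta (g t))) k).
    apply (coef_op_bound k g Wg). intros t ht. split; auto.
    apply Rle_trans with (Rabs (Anorm m l delta (g t))). apply Rle_abs.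
    apply (term_le_partial_sum (fun t => Rabs (Anorm m l delta (g t)))). intro; apply Rabs_pos. lia.
  - intros g g' hg hg' hgg. apply coef_op_welldef. auto.
  - intros g j x y a hj hg hx hy z hz i hi. rewrite coef_op_lin by auto. reflexivity.
  - intros g sg hsg hg z hz i hi. apply coef_op_sym. auto.
Qed.

Lemma coef_op_opnorm k :
  {nb : R | opnorm_is m l d delta k (coef_op l eta k) nb /\ 0 <= nb <= coef_mass k}.
Proof.
  assert (Hbnd : forall g, (forall i, (i < k)%nat -> inA m l delta (g i) /\ Anorm m l delta (g i) = 1) ->
                   Anorm m d delta (coef_op l eta k g) <= coef_mass k).
  { intros g H. replace (coef_mass k) with (coef_mass k * 1 ^ k) by (rewrite pow1; ring).
    apply coef_op_bound. intros t ht. destruct (H t ht). split; auto. lra. }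
  destruct (completeness (fun x => x = 0 \/ exists g : nat -> fn,
               (forall i, (i < k)%nat -> inA m l delta (g i) /\ Anorm m l delta (g i) = 1) /\
               x = Anorm m d delta (coef_op l eta k g))) as [nb [h1 h2]].
  - exists (coef_mass k). intros x [->|[g [hg ->]]]. apply coef_mass_ge0. apply Hbnd; auto.
  - exists 0. left; auto.
  - exists nb. split. split; auto. split.
    + apply h1. left; auto.
    + apply h2. intros y [->|[g [hg ->]]]. apply coef_mass_ge0. apply Hbnd; auto.
Qed.

Variable f : fn.
Hypothesis Hrep : represents l d rho f eta.

(** For [‖g‖_δ ≤ ρ], [g] maps the polydisc into [C^l(ρ)], and
    [f(g z) = Σ_k coef_op l η k (g, …, g) z]. *)
Lemma composition_series g : inA m l delta g -> Anorm m l delta g <= rho ->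
  forall z, polydisc m delta z -> forall i, (i < d)%nat ->
  Cser (fun k => coef_op l eta k (fun _ => g) z i) (f (g z) i).
Proof.
  intros hg hgr z hz i hi.
  assert (hgz : polydisc l rho (g z)).
  { intros j hj. eapply Rle_trans. 2: exact hgr.
    apply (expandable_value_bound m l delta g (Anorm m l delta g)); auto. lra. apply inA_expandable; auto. }
  eapply Ccv_ext. 2: apply (Hrep _ hgz i hi). intro n. apply Csum_ext. intros k _.
  rewrite coef_op_diag. reflexivity.
Qed.

Lemma coef_op_diag_expandable g k : inA m l delta g -> Anorm m l delta g <= rho ->
  expandable m d delta (coef_op l eta k (fun _ => g)) (norm_term l d rho eta k).
Proof.
  intros hg hgr. apply expandable_coef_op. lra. intros. eapply expandable_mono. apply inA_expandable; auto. auto.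
Qed.

Variable Nf : R.
Hypothesis Hsum : infinite_sum (norm_term l d rho eta) Nf.

Lemma composition_remainder g n : inA m l delta g -> Anorm m l delta g <= rho ->
  expandable m d delta (fsub (fun z => f (g z)) (fsum (fun k => coef_op l eta k (fun _ => g)) n))
    (Nf - sum_f_R0 (norm_term l d rho eta) n).
Proof.
  intros hg hgr.
  apply (expandable_series m d delta _ (fun k => if (k <=? n)%nat then fun _ _ => C0 else coef_op l eta k (fun _ => g))
           (fun k => if (k <=? n)%nat then 0 else norm_term l d rho eta k)). lra.
  - intro k. destruct (k <=? n)%nat. apply expandable_zero. apply coef_op_diag_expandable; auto.
  - apply series_drop; auto.
  - intros z hz i hi. unfold fsub.
    rewrite fsum_Csum.
    apply Ccv_ext_ev with (fun N => Csub (Csum (fun k => coef_op l eta k (fun _ => g) z i) N)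
                                         (Csum (fun k => coef_op l eta k (fun _ => g) z i) n)) n.
    + intros N hN. rewrite <- Csum_drop by auto. apply Csum_ext. intros k _. destruct (k <=? n)%nat; reflexivity.
    + apply Ccv_sub. apply composition_series; auto. apply Ccv_const.
Qed.

End Composition.

Theorem mainTheorem4 (l d m : nat) (rho delta : R) (f : fn) :
  0 < rho -> 0 < delta -> inA l d rho f ->
  (* C_f is well defined on E(rho) with values in F *)
  (forall g, inA m l delta g -> Anorm m l delta g <= rho ->
     inA m d delta (fun z => f (g z))) /\
  (* C_f in A_rho(E,F) with ||C_f||_{A_rho(E,F)} <= ||f||_rho *)
  exists (b : nat -> (nat -> fn) -> fn) (nb : nat -> R) (S : R),
    (forall k, sym_multilinear m l d delta k (b k) /\
               opnorm_is m l d delta k (b k) (nb k)) /\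
    infinite_sum (fun k => nb k * rho ^ k) S /\
    S <= Anorm l d rho f /\
    (forall g, inA m l delta g -> Anorm m l delta g <= rho ->
       Un_cv (fun n => Anorm m d delta
                 (fsub (fun z => f (g z)) (fsum (fun k => b k (fun _ => g)) n)))
             0).
Proof.
  intros hrho hdel [Nf HNf].
  rewrite (Anorm_eq l d rho f Nf hrho HNf). destruct HNf as [eta [Hrep Hsum]].
  set (nb := fun k => proj1_sig (coef_op_opnorm l d m delta eta hdel k)).
  assert (Hnb : forall k, opnorm_is m l d delta k (coef_op l eta k) (nb k) /\ 0 <= nb k <= coef_mass l d eta k)
    by (intro k; exact (proj2_sig (coef_op_opnorm l d m delta eta hdel k))).
  split.
  - (* [f ∘ g] is the sum of the series [Σ_k b_k(g, …, g)], of weight [‖f‖_ρ] *)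
    intros g hg hgr. apply (expandable_inA m d delta _ Nf hdel).
    apply (expandable_series m d delta _ (fun k => coef_op l eta k (fun _ => g)) (norm_term l d rho eta)). lra.
    + intro k. apply coef_op_diag_expandable; auto.
    + exact Hsum.
    + apply (composition_series l d m rho); auto.
  - (* [Σ_k ‖b_k‖ ρ^k ≤ Σ_k coef_mass k ρ^k = ‖f‖_ρ] *)
    destruct (series_comparison (fun k => nb k * rho ^ k) (norm_term l d rho eta) Nf) as [S [HS HSN]]; auto.
    { intro k. destruct (Hnb k) as [_ [h0 h1]]. pose proof (pow_le rho k ltac:(lra)). split. nra.
      apply Rmult_le_compat_r; auto. }
    exists (coef_op l eta), nb, S. split; [|split; [exact HS|split; [exact HSN|]]].
    + intro k. split. apply coef_op_sym_multilinear; auto. apply Hnb.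
    + (* the remainders are bounded by the rests of the norm series of [f] *)
      intros g hg hgr.
      apply Un_cv_squeeze0 with (fun n => Nf - sum_f_R0 (norm_term l d rho eta) n).
      2: apply series_rest_cv0; auto.
      intro n. destruct (expandable_inA _ _ _ _ _ hdel (composition_remainder l d m rho delta eta hdel f Hrep Nf Hsum g n hg hgr))
        as [h1 h2].
      split; auto. apply Anorm_ge0; auto.
Qed.
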